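(* If $\Gamma$ is a countable discrete group containing a central element of infinite order, then $\mathbb{C}\Gamma$ is not $C^*_r$-unique.
   Context: $\mathbb{C}\Gamma$ is the complex group algebra. $\mathbb{C}\Gamma$ is called $C^*_r$-unique if no $C^*$-norm on $\mathbb{C}\Gamma$ is properly majorised by the reduced $C^*$-norm (the norm from the left regular representation $\lambda:\mathbb{C}\Gamma\to\mathbb{B}(\ell^2\Gamma)$), i.e. there is no $C^*$-norm $\|\cdot\|$ on $\mathbb{C}\Gamma$ with $\|a\|\le\|\lambda(a)\|$ for all $a$ and strict inequality for some $a$. *)

From Stdlib Require Import Reals List ClassicalEpsilon.
Open Scope R_scope.

Definition C : Type := (R * R)%type.
Definition C0 : C := (0, 0).
Definition Cadd (z w : C) : C := (fst z + fst w, snd z + snd w).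
Definition Cmul (z w : C) : C :=
  (fst z * fst w - snd z * snd w, fst z * snd w + snd z * fst w).
Definition Cconj (z : C) : C := (fst z, - snd z).
Definition Cabs (z : C) : R := sqrt (fst z ^ 2 + snd z ^ 2).

(** Least upper bound of a set of reals (chosen classically; meaningful when
    the set is nonempty and bounded above). *)
Definition sup (E : R -> Prop) : R := epsilon (inhabits 0) (fun r => is_lub E r).

Record is_group {G : Type} (mul : G -> G -> G) (inv : G -> G) (e : G) : Prop := {
  grp_assoc : forall x y z, mul x (mul y z) = mul (mul x y) z;
  grp_id_l : forall x, mul e x = x;
  grp_inv_l : forall x, mul (inv x) x = e
}.

Definition countable (G : Type) : Prop :=
  exists f : G -> nat, forall x y, f x = f y -> x = y.

Fixpoint gpow {G : Type} (mul : G -> G -> G) (e : G) (z : G) (n : nat) : G :=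
  match n with O => e | S n => mul z (gpow mul e z n) end.

Section GroupAlgebra.
Variables (G : Type) (mul : G -> G -> G) (inv : G -> G).

(** Elements of the complex group algebra CG: finitely supported functions G -> C. *)
Definition finsupp (a : G -> C) : Prop :=
  exists l : list G, forall g, a g <> C0 -> In g l.

Definition fsum (f : G -> C) : C :=
  let l := epsilon (inhabits nil)
             (fun l => NoDup l /\ forall g, f g <> C0 -> In g l) in
  fold_right (fun g acc => Cadd (f g) acc) C0 l.

Definition gadd (a b : G -> C) : G -> C := fun g => Cadd (a g) (b g).
Definition gscale (z : C) (a : G -> C) : G -> C := fun g => Cmul z (a g).
Definition gconv (a b : G -> C) : G -> C :=
  fun g => fsum (fun h => Cmul (a h) (b (mul (inv h) g))).
Definition gstar (a : G -> C) : G -> C := fun g => Cconj (a (inv g)).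

Definition sumsq_set (xi : G -> C) (r : R) : Prop :=
  exists l : list G, NoDup l /\
    r = fold_right (fun g acc => Cabs (xi g) ^ 2 + acc) 0 l.
Definition in_l2 (xi : G -> C) : Prop := bound (sumsq_set xi).
Definition l2norm (xi : G -> C) : R := sqrt (sup (sumsq_set xi)).

Definition lambda (a : G -> C) (xi : G -> C) : G -> C :=
  fun g => fsum (fun h => Cmul (a h) (xi (mul (inv h) g))).

Definition reduced_norm (a : G -> C) : R :=
  sup (fun r => exists xi, in_l2 xi /\ l2norm xi <= 1 /\ r = l2norm (lambda a xi)).

Record is_Cstar_norm (N : (G -> C) -> R) : Prop := {
  cn_nonneg : forall a, finsupp a -> 0 <= N a;
  cn_definite : forall a, finsupp a -> N a = 0 -> forall g, a g = C0;
  cn_triangle : forall a b, finsupp a -> finsupp b -> N (gadd a b) <= N a + N b;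
  cn_homog : forall z a, finsupp a -> N (gscale z a) = Cabs z * N a;
  cn_submult : forall a b, finsupp a -> finsupp b -> N (gconv a b) <= N a * N b;
  cn_cstar : forall a, finsupp a -> N (gconv (gstar a) a) = N a ^ 2
}.

Definition Cr_unique : Prop :=
  ~ exists N : (G -> C) -> R,
      is_Cstar_norm N /\
      (forall a, finsupp a -> N a <= reduced_norm a) /\
      (exists a, finsupp a /\ N a < reduced_norm a).

End GroupAlgebra.

From Pilot Require Import Defs.
From Stdlib Require Import Reals List ClassicalEpsilon Permutation Lra Lia FunctionalExtensionality.
From Coquelicot Require Import Complex.
Open Scope R_scope.

(* Let [z] be central of infinite order. Instead of the operator norm of [lambda a] on all of
   l^2, take [arc_norm a]: the limit, as [eps] goes to 0, of the supremum of [|lambda a eta|]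
   over unit vectors [eta] that are [eps]-almost eigenvectors of [lambda z] with eigenvalue in
   the closed left half of the unit circle (morally, the norm of [lambda a] on the spectral
   subspace of [lambda z] for that arc). Since [z] is central, [lambda b] maps such vectors to
   almost eigenvectors for the same eigenvalue, which makes [arc_norm] a C*-seminorm below the
   reduced norm. It is definite: the normalised progressions [sum_(k<n) s^k delta_(z^k)] with
   [|s| = 1] are almost eigenvectors, and [lambda b] multiplies most of their entries by a
   polynomial in [s] built from the values of [b] on the powers of [z], which is nonzero at
   some [s] of the arc when [b e <> 0]. Finally [lambda (delta_e + delta_z)] acts on such
   vectors almost as [1 + t] with [Re t <= 0], so its arc norm is at most [sqrt 2], while its
   reduced norm is at least [sqrt 3]. *)

(* The operations of [Defs] are convertible to Coquelicot's, but [ring] only recognises the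
   latter. *)
Ltac Cring :=
  try change Cmul with Cmult; try change Cadd with Cplus; try change C0 with (RtoC 0);
  try change Defs.Cconj with Cconj;
  match goal with |- @eq _ ?x ?y => change (@eq C x y) end; ring.

Definition classical_eq_dec (T : Type) (x y : T) : {x = y} + {x <> y} :=
  excluded_middle_informative (x = y).

Lemma Cplus_neq0 (a b : C) : Cplus a b <> RtoC 0 -> a <> RtoC 0 \/ b <> RtoC 0.
Proof.
  intros H. destruct (excluded_middle_informative (a = RtoC 0)) as [->|]; auto.
  right; intros ->; apply H; ring.
Qed.

Lemma Cmult_neq0 (a b : C) : Cmult a b <> RtoC 0 -> a <> RtoC 0 /\ b <> RtoC 0.
Proof. intros H; split; intros E; apply H; rewrite E; ring. Qed.

Lemma Cmult_eq0 (a b : C) : Cmult a b = RtoC 0 -> a = RtoC 0 \/ b = RtoC 0.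
Proof.
  intros H. destruct (excluded_middle_informative (a = RtoC 0)) as [|Ha]; auto.
  right. replace b with (Cmult (Cinv a) (Cmult a b)) by (field; auto). rewrite H; ring.
Qed.

Lemma Cconj_neq0 (a : C) : Cconj a <> RtoC 0 -> a <> RtoC 0.
Proof. intros H ->. apply H, injective_projections; simpl; ring. Qed.

Section ListSums.
Variable T : Type.

Definition lsumC (l : list T) (f : T -> C) : C :=
  fold_right (fun g acc => Cplus (f g) acc) (RtoC 0) l.
Definition lsumR (l : list T) (f : T -> R) : R :=
  fold_right (fun g acc => f g + acc) 0 l.
Definition supp_in (l : list T) (f : T -> C) : Prop :=
  forall g, f g <> RtoC 0 -> In g l.
Definition sqsum (l : list T) (xi : T -> C) : R := lsumR l (fun g => Cmod (xi g) ^ 2).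

Arguments lsumC : simpl never.
Arguments lsumR : simpl never.

Lemma lsumC_nil f : lsumC nil f = RtoC 0. Proof. reflexivity. Qed.
Lemma lsumR_nil f : lsumR nil f = 0. Proof. reflexivity. Qed.
Lemma lsumC_cons x l f : lsumC (x :: l) f = Cplus (f x) (lsumC l f). Proof. reflexivity. Qed.
Lemma lsumR_cons x l f : lsumR (x :: l) f = f x + lsumR l f. Proof. reflexivity. Qed.

Lemma lsumC_app l1 l2 f : lsumC (l1 ++ l2) f = Cplus (lsumC l1 f) (lsumC l2 f).
Proof.
  induction l1; simpl; [rewrite lsumC_nil; ring|]. rewrite !lsumC_cons, IHl1; ring.
Qed.

Lemma lsumR_app l1 l2 f : lsumR (l1 ++ l2) f = lsumR l1 f + lsumR l2 f.
Proof.
  induction l1; simpl; [rewrite lsumR_nil; ring|]. rewrite !lsumR_cons, IHl1; ring.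
Qed.

Lemma lsumC_ext l f h : (forall g, In g l -> f g = h g) -> lsumC l f = lsumC l h.
Proof.
  induction l; intros H; auto.
  rewrite !lsumC_cons, H, IHl; simpl; auto; intros; apply H; simpl; auto.
Qed.

Lemma lsumR_ext l f h : (forall g, In g l -> f g = h g) -> lsumR l f = lsumR l h.
Proof.
  induction l; intros H; auto.
  rewrite !lsumR_cons, H, IHl; simpl; auto; intros; apply H; simpl; auto.
Qed.

Lemma lsumC_eq0 l f : (forall g, In g l -> f g = RtoC 0) -> lsumC l f = RtoC 0.
Proof.
  induction l; intros H; auto.
  rewrite lsumC_cons, H, IHl; [ring | intros; apply H; simpl; auto | simpl; auto].
Qed.

Lemma lsumC_perm l1 l2 f : Permutation l1 l2 -> lsumC l1 f = lsumC l2 f.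
Proof.
  induction 1; auto; try congruence.
  - rewrite !lsumC_cons, IHPermutation; auto.
  - rewrite !lsumC_cons; ring.
Qed.

Lemma lsumR_perm l1 l2 f : Permutation l1 l2 -> lsumR l1 f = lsumR l2 f.
Proof.
  induction 1; auto; try congruence.
  - rewrite !lsumR_cons, IHPermutation; auto.
  - rewrite !lsumR_cons; ring.
Qed.

Lemma lsumC_plus l f h :
  lsumC l (fun g => Cplus (f g) (h g)) = Cplus (lsumC l f) (lsumC l h).
Proof. induction l; [rewrite !lsumC_nil; ring|]. rewrite !lsumC_cons, IHl; ring. Qed.

Lemma lsumC_scal l c f : lsumC l (fun g => Cmult c (f g)) = Cmult c (lsumC l f).
Proof. induction l; [rewrite !lsumC_nil; ring|]. rewrite !lsumC_cons, IHl; ring. Qed.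

Lemma lsumC_conj l f : Cconj (lsumC l f) = lsumC l (fun g => Cconj (f g)).
Proof.
  induction l; [apply injective_projections; simpl; ring|].
  rewrite !lsumC_cons, Cplus_conj, IHl; auto.
Qed.

Lemma lsumR_plus l f h : lsumR l (fun g => f g + h g) = lsumR l f + lsumR l h.
Proof. induction l; [rewrite !lsumR_nil; ring|]. rewrite !lsumR_cons, IHl; ring. Qed.

Lemma lsumR_scal l c f : lsumR l (fun g => c * f g) = c * lsumR l f.
Proof. induction l; [rewrite !lsumR_nil; ring|]. rewrite !lsumR_cons, IHl; ring. Qed.

Lemma lsumR_const l c : lsumR l (fun _ => c) = INR (length l) * c.
Proof.
  induction l; [rewrite lsumR_nil; simpl; ring|].
  rewrite lsumR_cons, IHl; cbn [length]; rewrite S_INR; ring.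
Qed.

Lemma lsumR_ge0 l f : (forall g, 0 <= f g) -> 0 <= lsumR l f.
Proof.
  intros H; induction l; [rewrite lsumR_nil; lra|]. rewrite lsumR_cons; specialize (H a); lra.
Qed.

Lemma lsumR_le l f h : (forall g, In g l -> f g <= h g) -> lsumR l f <= lsumR l h.
Proof.
  induction l; intros H; [rewrite !lsumR_nil; lra|]. rewrite !lsumR_cons.
  apply Rplus_le_compat; [apply H; simpl; auto | apply IHl; intros; apply H; simpl; auto].
Qed.

Lemma Cmod_lsumC_le l f : Cmod (lsumC l f) <= lsumR l (fun g => Cmod (f g)).
Proof.
  induction l; [rewrite lsumC_nil, lsumR_nil, Cmod_0; lra|].
  rewrite lsumC_cons, lsumR_cons. eapply Rle_trans; [apply Cmod_triangle | lra].
Qed.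

Lemma lsumC_neq0 l f : lsumC l f <> RtoC 0 -> exists g, In g l /\ f g <> RtoC 0.
Proof.
  intros H. destruct (excluded_middle_informative (exists g, In g l /\ f g <> RtoC 0)) as [|Hn];
    auto.
  exfalso. apply H, lsumC_eq0. intros g Hg.
  destruct (excluded_middle_informative (f g = RtoC 0)); auto. exfalso; eauto.
Qed.

Lemma lsumC_swap (l1 l2 : list T) (F : T -> T -> C) :
  lsumC l1 (fun x => lsumC l2 (F x)) = lsumC l2 (fun y => lsumC l1 (fun x => F x y)).
Proof.
  induction l1; simpl.
  - rewrite lsumC_nil. symmetry; apply lsumC_eq0; auto.
  - rewrite lsumC_cons, IHl1, <- lsumC_plus. apply lsumC_ext; intros; rewrite lsumC_cons; auto.
Qed.

Lemma lsumC_single l f k : NoDup l -> In k l ->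
  (forall i, In i l -> i <> k -> f i = RtoC 0) -> lsumC l f = f k.
Proof.
  induction l as [|a l IH]; intros N Hk H; [destruct Hk|].
  inversion N; subst. rewrite lsumC_cons. destruct Hk as [->|Hk].
  - rewrite lsumC_eq0; [ring|]. intros i Hi. apply H; [right; auto | intros ->; contradiction].
  - rewrite H, IH; auto; [ring | intros; apply H; simpl; auto | left; auto | ].
    intros ->; contradiction.
Qed.

Lemma lsumC_drop_zeros l f : lsumC l f = lsumC (filter (fun g =>
  if excluded_middle_informative (f g = RtoC 0) then false else true) l) f.
Proof.
  induction l; auto. simpl.
  destruct (excluded_middle_informative (f a = RtoC 0)) as [E|E];
    rewrite !lsumC_cons, ?E, IHl; auto. ring.
Qed.

Lemma lsumC_supp_in_eq l1 l2 f : NoDup l1 -> NoDup l2 -> supp_in l1 f -> supp_in l2 f ->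
  lsumC l1 f = lsumC l2 f.
Proof.
  intros N1 N2 S1 S2. rewrite (lsumC_drop_zeros l1), (lsumC_drop_zeros l2).
  apply lsumC_perm, NoDup_Permutation; try apply NoDup_filter; auto.
  intros x. rewrite !filter_In.
  destruct (excluded_middle_informative (f x = RtoC 0)); split; intros [H1 H2];
    try discriminate; auto.
Qed.

Lemma lsumR_incl (l1 l2 : list T) f : (forall g, 0 <= f g) -> NoDup l1 -> NoDup l2 ->
  incl l1 l2 -> lsumR l1 f <= lsumR l2 f.
Proof.
  revert l2. induction l1 as [|x l1 IH]; intros l2 Hf N1 N2 I; [apply lsumR_ge0; auto|].
  assert (Hx : In x l2) by (apply I; simpl; auto).
  destruct (in_split _ _ Hx) as [u [v ->]].
  rewrite (lsumR_perm (u ++ x :: v) (x :: u ++ v)) by (symmetry; apply Permutation_middle).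
  rewrite !lsumR_cons. inversion N1; subst.
  apply Rplus_le_compat_l, IH; auto.
  - apply NoDup_remove_1 in N2; auto.
  - intros y Hy. specialize (I y (or_intror Hy)). apply in_app_or in I. apply in_or_app.
    destruct I as [I|[I|I]]; auto. subst; contradiction.
Qed.

Lemma lsumR_filter (l : list T) f P :
  (forall g, P g = false -> f g = 0) -> lsumR l f = lsumR (filter P l) f.
Proof.
  intros H; induction l; auto. simpl.
  destruct (P a) eqn:E; rewrite ?lsumR_cons, IHl; auto. rewrite H; auto; ring.
Qed.

Lemma lsumR_CauchySchwarz (l : list T) (x y : T -> R) :
  lsumR l (fun g => x g * y g) <=
  sqrt (lsumR l (fun g => x g ^ 2)) * sqrt (lsumR l (fun g => y g ^ 2)).
Proof.
  induction l as [|g0 l IHl]; [rewrite !lsumR_nil, sqrt_0; lra|].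
  rewrite !lsumR_cons.
  assert (HA : 0 <= lsumR l (fun g => x g ^ 2)) by (apply lsumR_ge0; intros; apply pow2_ge_0).
  assert (HB : 0 <= lsumR l (fun g => y g ^ 2)) by (apply lsumR_ge0; intros; apply pow2_ge_0).
  set (A := lsumR l (fun g => x g ^ 2)) in *. set (B := lsumR l (fun g => y g ^ 2)) in *.
  set (S := lsumR l (fun g => x g * y g)) in *.
  pose proof (sqrt_sqrt A HA). pose proof (sqrt_sqrt B HB).
  pose proof (sqrt_pos A). pose proof (sqrt_pos B).
  set (a := sqrt A) in *. set (b := sqrt B) in *. set (u := x g0). set (v := y g0).
  rewrite <- sqrt_mult by nra.
  apply Rle_trans with (Rabs u * Rabs v + a * b).
  { rewrite <- Rabs_mult. pose proof (Rle_abs (u * v)). unfold u, v in *. lra. }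
  apply Rsqr_incr_0_var; [|apply sqrt_pos].
  rewrite Rsqr_sqrt by nra. unfold Rsqr.
  rewrite <- (pow2_abs u), <- (pow2_abs v), <- H, <- H0.
  pose proof (Rabs_pos u). pose proof (Rabs_pos v).
  assert (0 <= (Rabs u * b - Rabs v * a) ^ 2) by apply pow2_ge_0. nra.
Qed.

Lemma sqsum_ge0 l xi : 0 <= sqsum l xi.
Proof. apply lsumR_ge0; intros; apply pow2_ge_0. Qed.

Lemma sqsum_scal l c xi : sqsum l (fun g => Cmult c (xi g)) = Cmod c ^ 2 * sqsum l xi.
Proof. unfold sqsum. rewrite <- lsumR_scal. apply lsumR_ext; intros; rewrite Cmod_mult; ring. Qed.

Lemma sqsum_zero l : sqsum l (fun _ => RtoC 0) = 0.
Proof.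
  unfold sqsum. rewrite (lsumR_ext l _ (fun _ => 0)), lsumR_const; [ring|].
  intros; rewrite Cmod_0; ring.
Qed.

Lemma sqsum_Minkowski l xi eta :
  sqrt (sqsum l (fun g => Cplus (xi g) (eta g))) <= sqrt (sqsum l xi) + sqrt (sqsum l eta).
Proof.
  assert (Hexp : sqsum l (fun g => Cplus (xi g) (eta g)) <=
      sqsum l xi + sqsum l eta + 2 * lsumR l (fun g => Cmod (xi g) * Cmod (eta g))).
  { unfold sqsum. rewrite <- lsumR_scal, <- !lsumR_plus. apply lsumR_le. intros g _.
    pose proof (Cmod_triangle (xi g) (eta g)). pose proof (Cmod_ge_0 (Cplus (xi g) (eta g))).
    pose proof (Cmod_ge_0 (xi g)). pose proof (Cmod_ge_0 (eta g)). nra. }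
  pose proof (lsumR_CauchySchwarz l (fun g => Cmod (xi g)) (fun g => Cmod (eta g))) as HCS.
  cbv beta in HCS. fold (sqsum l xi) (sqsum l eta) in HCS.
  pose proof (sqrt_sqrt _ (sqsum_ge0 l xi)). pose proof (sqrt_sqrt _ (sqsum_ge0 l eta)).
  pose proof (sqrt_pos (sqsum l xi)). pose proof (sqrt_pos (sqsum l eta)).
  apply Rsqr_incr_0_var; [|lra]. rewrite Rsqr_sqrt by apply sqsum_ge0. unfold Rsqr. nra.
Qed.

Lemma sqsum_Minkowski_sum (l : list T) (L : list T) (W : T -> T -> C) :
  sqrt (sqsum l (fun g => lsumC L (fun h => W h g))) <= lsumR L (fun h => sqrt (sqsum l (W h))).
Proof.
  induction L as [|h L IH].
  - rewrite lsumR_nil. replace (fun g => lsumC nil (fun h => W h g)) with (fun _ : T => RtoC 0)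
      by reflexivity. rewrite sqsum_zero, sqrt_0; lra.
  - rewrite lsumR_cons.
    change (fun g => lsumC (h :: L) (fun h0 => W h0 g))
      with (fun g => Cplus (W h g) (lsumC L (fun h0 => W h0 g))).
    eapply Rle_trans; [apply sqsum_Minkowski | lra].
Qed.

Lemma lsumC_mult_conj l f :
  lsumC l (fun g => Cmult (f g) (Cconj (f g))) = RtoC (sqsum l f).
Proof.
  unfold sqsum; induction l; auto.
  rewrite lsumC_cons, lsumR_cons, IHl, RtoC_plus, Cmod2_conj; auto.
Qed.

End ListSums.

Arguments lsumC : simpl never.
Arguments lsumR : simpl never.

Lemma lsumC_map (A T : Type) (phi : A -> T) l f :
  lsumC T (map phi l) f = lsumC A l (fun x => f (phi x)).
Proof. induction l; auto. cbn [map]. rewrite !lsumC_cons, IHl; auto. Qed.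

Lemma lsumR_map (A T : Type) (phi : A -> T) l f :
  lsumR T (map phi l) f = lsumR A l (fun x => f (phi x)).
Proof. induction l; auto. cbn [map]. rewrite !lsumR_cons, IHl; auto. Qed.

Lemma lsumC_seq_shift m W f :
  lsumC nat (seq m W) f = lsumC nat (seq 0 W) (fun j => f (m + j)%nat).
Proof.
  revert f. induction m; intros f; [apply lsumC_ext; auto|].
  rewrite <- seq_shift, lsumC_map, IHm. apply lsumC_ext; intros; f_equal; lia.
Qed.

Lemma lsumC_seq_window n m W f : (m + W <= n)%nat ->
  (forall i, (i < m \/ m + W <= i)%nat -> f i = RtoC 0) ->
  lsumC nat (seq 0 n) f = lsumC nat (seq m W) f.
Proof.
  intros Hn H. replace n with (m + (W + (n - m - W)))%nat by lia.
  rewrite !seq_app, !lsumC_app. simpl Nat.add.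
  rewrite (lsumC_eq0 _ (seq 0 m)), (lsumC_eq0 _ (seq (m + W) _)).
  - ring.
  - intros i Hi. apply in_seq in Hi. apply H. lia.
  - intros i Hi. apply in_seq in Hi. apply H. lia.
Qed.

Lemma sup_of_is_lub E r : is_lub E r -> sup E = r.
Proof.
  intros [U L]. unfold sup.
  destruct (epsilon_spec (inhabits 0) (fun r0 => is_lub E r0) (ex_intro _ r (conj U L)))
    as [U' L'].
  apply Rle_antisym; auto.
Qed.

Lemma sup_is_lub E : bound E -> (exists x, E x) -> is_lub E (sup E).
Proof.
  intros B Ex. destruct (completeness E B Ex) as [m Hm]. rewrite (sup_of_is_lub E m Hm); auto.
Qed.

Lemma le_sup E x : bound E -> E x -> x <= sup E.
Proof. intros B Ex. apply (sup_is_lub E B (ex_intro _ x Ex)); auto. Qed.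

Lemma sup_le E c : (exists x, E x) -> (forall x, E x -> x <= c) -> sup E <= c.
Proof. intros Ex H. apply (sup_is_lub E (ex_intro _ c H) Ex). exact H. Qed.

Lemma sup_approx E d : bound E -> (exists x, E x) -> 0 < d -> exists x, E x /\ sup E - d < x.
Proof.
  intros B Ex Hd. destruct (excluded_middle_informative (exists x, E x /\ sup E - d < x)) as [|H];
    auto.
  exfalso. enough (sup E <= sup E - d) by lra.
  apply sup_le; auto. intros x Hx. apply Rnot_lt_le. intros Hlt. apply H; eauto.
Qed.

Lemma le_Rmax_sqrt x m (c : R) : 0 <= x -> 0 <= m -> 0 <= c ->
  x ^ 2 <= Rmax c (x * m) -> x <= Rmax (sqrt c) m.
Proof.
  intros Hx Hm Hc H. destruct (Rle_dec x m) as [|Hxm]; [eapply Rle_trans; [|apply Rmax_r]; auto|].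
  apply Rle_trans with (sqrt c); [|apply Rmax_l].
  rewrite <- (sqrt_pow2 x) by auto. apply sqrt_le_1_alt.
  destruct (Rle_dec c (x * m));
    [rewrite Rmax_right in H by auto; nra | rewrite Rmax_left in H; lra].
Qed.

Lemma Rmult_plus_small_le A B gam : 0 <= A -> 0 <= B -> 0 < gam ->
  exists rho, 0 < rho /\ (A + rho) * (B + rho) <= A * B + gam.
Proof.
  intros HA HB Hg. exists (Rmin 1 (gam / (A + B + 1))).
  assert (Hr : 0 < Rmin 1 (gam / (A + B + 1)))
    by (apply Rmin_glb_lt; [lra | apply Rdiv_lt_0_compat; lra]).
  split; auto.
  pose proof (Rmin_l 1 (gam / (A + B + 1))). pose proof (Rmin_r 1 (gam / (A + B + 1))).
  set (rho := Rmin 1 (gam / (A + B + 1))) in *.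
  assert (rho * (A + B + 1) <= gam).
  { apply Rle_trans with (gam / (A + B + 1) * (A + B + 1)); [apply Rmult_le_compat_r; lra|].
    right; field; lra. }
  nra.
Qed.

Lemma Rmult_div_succ_le (C gam : R) : 0 <= C -> 0 < gam ->
  0 < gam / (C + 1) /\ C * (gam / (C + 1)) <= gam.
Proof.
  intros HC Hg. split; [apply Rdiv_lt_0_compat; lra|].
  apply Rmult_le_reg_r with (C + 1); [lra|].
  replace (C * (gam / (C + 1)) * (C + 1)) with (C * gam) by (field; lra). nra.
Qed.

Lemma Cmod_inv_sqrt_sq x : 0 < x -> Cmod (RtoC (/ sqrt x)) ^ 2 = / x.
Proof.
  intros Hx. rewrite Cmod_R, Rabs_right, pow_inv; [simpl; rewrite Rmult_1_r, sqrt_sqrt; lra|].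
  left; apply Rinv_0_lt_compat, sqrt_lt_R0; auto.
Qed.

(** * Polynomials and the left half of the unit circle *)

(* Polynomials are coefficient lists, lowest degree first. *)
Fixpoint horner (cs : list C) (x : C) : C :=
  match cs with nil => RtoC 0 | c :: cs' => Cplus c (Cmult x (horner cs' x)) end.

(* synthetic division of [cs] by [X - p], discarding the remainder [horner cs p] *)
Fixpoint horner_quot (cs : list C) (p : C) : list C :=
  match cs with
  | nil => nil
  | c :: cs' => match cs' with nil => nil | _ => horner cs' p :: horner_quot cs' p end
  end.

Lemma horner_quot_spec cs x p :
  Cminus (horner cs x) (horner cs p) = Cmult (Cminus x p) (horner (horner_quot cs p) x).
Proof.
  induction cs as [|c cs IH]; [simpl; ring|].
  destruct cs as [|c2 cs2]; [simpl; ring|].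
  set (cs := c2 :: cs2) in *.
  change (horner_quot (c :: cs) p) with (horner cs p :: horner_quot cs p).
  cbn [horner].
  replace (horner cs x)
    with (Cplus (horner cs p) (Cmult (Cminus x p) (horner (horner_quot cs p) x)))
    by (rewrite <- IH; ring).
  ring.
Qed.

Lemma length_horner_quot cs p : length (horner_quot cs p) = pred (length cs).
Proof. induction cs as [|c cs IH]; simpl; auto. destruct cs; simpl in *; auto. Qed.

Lemma zero_coeffs_of_quot cs p :
  Forall (fun c => c = RtoC 0) (horner_quot cs p) -> horner cs p = RtoC 0 ->
  Forall (fun c => c = RtoC 0) cs.
Proof.
  induction cs as [|c cs IH]; intros Hq Hp; [constructor|].
  destruct cs as [|c2 cs2].
  - simpl in Hp. constructor; [rewrite <- Hp; ring | constructor].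
  - set (cs := c2 :: cs2) in *.
    change (horner_quot (c :: cs) p) with (horner cs p :: horner_quot cs p) in Hq.
    inversion_clear Hq as [|? ? Hcs_p Hq'].
    constructor; [|apply IH; auto].
    change (horner (c :: cs) p) with (Cplus c (Cmult p (horner cs p))) in Hp.
    change (horner cs p = RtoC 0) in Hcs_p. rewrite Hcs_p in Hp. rewrite <- Hp; ring.
Qed.

Lemma zero_coeffs_of_roots ps : forall cs, NoDup ps -> (length cs <= length ps)%nat ->
  (forall p, In p ps -> horner cs p = RtoC 0) -> Forall (fun c => c = RtoC 0) cs.
Proof.
  induction ps as [|p ps IH]; intros cs Nps Hlen Hroot.
  - destruct cs; simpl in *; [constructor | lia].
  - inversion Nps; subst.
    apply (zero_coeffs_of_quot cs p); [|apply Hroot; left; auto].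
    apply IH; auto.
    + rewrite length_horner_quot. simpl in Hlen. lia.
    + intros x Hx. pose proof (horner_quot_spec cs x p) as Q.
      rewrite (Hroot x (or_intror Hx)), (Hroot p (or_introl eq_refl)) in Q.
      destruct (Cmult_eq0 (Cminus x p) (horner (horner_quot cs p) x)) as [E|E]; auto.
      * rewrite <- Q; ring.
      * exfalso. replace x with p in Hx; auto.
        replace x with (Cplus (Cminus x p) p) by ring. rewrite E; ring.
Qed.

Lemma horner_nonvanishing cs ps : NoDup ps -> (length cs <= length ps)%nat ->
  (exists c, In c cs /\ c <> RtoC 0) -> exists p, In p ps /\ horner cs p <> RtoC 0.
Proof.
  intros N L [c [Hc Hn]].
  destruct (excluded_middle_informative (exists p, In p ps /\ horner cs p <> RtoC 0)) as [|H];
    auto.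
  exfalso. apply Hn.
  refine (proj1 (Forall_forall _ _) (zero_coeffs_of_roots ps cs N L _) c Hc).
  intros p Hp. destruct (excluded_middle_informative (horner cs p = RtoC 0)); auto.
  exfalso; eauto.
Qed.

Definition left_arc (t : C) : Prop := fst t <= 0 /\ Cmod t = 1.

Lemma left_arc_m1 : left_arc (RtoC (-1)).
Proof. split; [simpl; lra | rewrite Cmod_R, Rabs_left; lra]. Qed.

Lemma left_arc_conj t : left_arc t -> left_arc (Cconj t).
Proof. intros [H1 H2]. split; [simpl; auto | rewrite Cmod_conj; auto]. Qed.

Lemma Cmod_1_plus_left_arc t : left_arc t -> Cmod (Cplus (RtoC 1) t) <= sqrt 2.
Proof.
  intros [H1 H2]. unfold Cmod in *. apply sqrt_le_1_alt.
  assert (E : fst t ^ 2 + snd t ^ 2 = 1).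
  { rewrite <- (sqrt_sqrt (fst t ^ 2 + snd t ^ 2)) by nra. rewrite H2; ring. }
  simpl. nra.
Qed.

Definition left_arc_point (k : nat) : C :=
  (- / (INR k + 1), sqrt (1 - (/ (INR k + 1)) ^ 2)).

Lemma left_arc_point_spec k : left_arc (left_arc_point k).
Proof.
  pose proof (pos_INR k). assert (H1 : 0 < / (INR k + 1)) by (apply Rinv_0_lt_compat; lra).
  assert (H2 : / (INR k + 1) <= 1) by (rewrite <- Rinv_1; apply Rinv_le_contravar; lra).
  split; [simpl; lra|].
  unfold Cmod, left_arc_point; cbn [fst snd]. rewrite pow2_sqrt by nra.
  replace ((- / (INR k + 1)) ^ 2 + (1 - (/ (INR k + 1)) ^ 2)) with 1 by ring. apply sqrt_1.
Qed.

Lemma left_arc_points_NoDup L : NoDup (map left_arc_point (seq 0 L)).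
Proof.
  apply FinFun.Injective_map_NoDup; [|apply seq_NoDup].
  intros i j H. injection H as H1 _. pose proof (pos_INR i). pose proof (pos_INR j).
  apply INR_eq. assert (/ (INR i + 1) = / (INR j + 1)) by lra.
  apply Rinv_eq_reg in H2; lra.
Qed.

Lemma lsumC_seq_horner k W r s :
  lsumC nat (seq k W) (fun j => Cmult (r j) (Cpow s j)) =
  Cmult (Cpow s k) (horner (map r (seq k W)) s).
Proof.
  revert k. induction W; intros k; cbn [seq map horner]; [rewrite lsumC_nil; ring|].
  rewrite lsumC_cons, IHW. cbn [Cpow]. ring.
Qed.

(** * Finitely supported functions on a group and the regular representation *)

Section GroupAlgebra.
Variable G : Type.

Local Notation finsupp := (finsupp G).
Local Notation fsum := (fsum G).
Local Notation l2norm := (l2norm G).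
Local Notation in_l2 := (in_l2 G).
Local Notation supp_in := (supp_in G).
Local Notation sqsum := (sqsum G).
Local Notation nodup := (nodup (classical_eq_dec G)).
Implicit Types (f a b xi eta zeta : G -> C) (c : C) (l : list G).

Lemma supp_in_nodup l f : supp_in l f -> supp_in (nodup l) f.
Proof. intros H g Hg; apply nodup_In; auto. Qed.

Lemma finsupp_NoDup f : finsupp f -> exists l, NoDup l /\ supp_in l f.
Proof. intros [l H]. exists (nodup l). split; [apply NoDup_nodup | apply supp_in_nodup; auto]. Qed.

Lemma supp_in_app_l l1 l2 f : supp_in l1 f -> supp_in (l1 ++ l2) f.
Proof. intros H g Hg; apply in_or_app; auto. Qed.

Lemma supp_in_app_r l1 l2 f : supp_in l2 f -> supp_in (l1 ++ l2) f.
Proof. intros H g Hg; apply in_or_app; auto. Qed.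

Lemma supp_in_mult_l l a f : supp_in l a -> supp_in l (fun h => Cmult (a h) (f h)).
Proof. intros H h Hh. apply Cmult_neq0 in Hh. apply H; tauto. Qed.

Lemma supp_in_mult_r l a f : supp_in l a -> supp_in l (fun h => Cmult (f h) (a h)).
Proof. intros H h Hh. apply Cmult_neq0 in Hh. apply H; tauto. Qed.

Lemma finsupp_mult_l a f : finsupp a -> finsupp (fun h => Cmult (a h) (f h)).
Proof. intros [l H]. exists l. apply supp_in_mult_l; auto. Qed.

Lemma finsupp_mult_r a f : finsupp a -> finsupp (fun h => Cmult (f h) (a h)).
Proof. intros [l H]. exists l. apply supp_in_mult_r; auto. Qed.

Lemma finsupp_scal c a : finsupp a -> finsupp (fun g => Cmult c (a g)).
Proof. apply finsupp_mult_r. Qed.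

Lemma finsupp_plus a b : finsupp a -> finsupp b -> finsupp (fun g => Cplus (a g) (b g)).
Proof.
  intros [l1 H1] [l2 H2]. exists (l1 ++ l2). intros g Hg.
  destruct (Cplus_neq0 _ _ Hg); apply in_or_app; auto.
Qed.

Lemma finsupp_zero : finsupp (fun _ => RtoC 0).
Proof. exists nil. intros g H; now apply H. Qed.

Lemma fsum_eq_lsumC l f : NoDup l -> supp_in l f -> fsum f = lsumC G l f.
Proof.
  intros N S. unfold fsum.
  set (P := fun l0 : list G => NoDup l0 /\ (forall g, f g <> C0 -> In g l0)).
  destruct (epsilon_spec (inhabits nil) P (ex_intro _ l (conj N S))) as [N' S'].
  apply lsumC_supp_in_eq; auto.
Qed.

Lemma fsum_eq_lsumC_nodup l f : supp_in l f -> fsum f = lsumC G (nodup l) f.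
Proof. intros H. apply fsum_eq_lsumC; [apply NoDup_nodup | apply supp_in_nodup; auto]. Qed.

Lemma fsum_plus f h : finsupp f -> finsupp h ->
  fsum (fun g => Cplus (f g) (h g)) = Cplus (fsum f) (fsum h).
Proof.
  intros [l1 H1] [l2 H2].
  assert (Hfh : supp_in (l1 ++ l2) (fun g => Cplus (f g) (h g))).
  { intros g Hg. destruct (Cplus_neq0 _ _ Hg); apply in_or_app; auto. }
  rewrite (fsum_eq_lsumC_nodup _ _ (supp_in_app_l _ l2 _ H1)),
    (fsum_eq_lsumC_nodup _ _ (supp_in_app_r l1 _ _ H2)), (fsum_eq_lsumC_nodup _ _ Hfh).
  apply lsumC_plus.
Qed.

Lemma fsum_scal c f : finsupp f -> fsum (fun g => Cmult c (f g)) = Cmult c (fsum f).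
Proof.
  intros [l H]. rewrite (fsum_eq_lsumC_nodup l f), (fsum_eq_lsumC_nodup l) by
    (auto; apply supp_in_mult_r; auto).
  apply lsumC_scal.
Qed.

Lemma fsum_scal_r c f : finsupp f -> fsum (fun g => Cmult (f g) c) = Cmult (fsum f) c.
Proof.
  intros H. rewrite Cmult_comm, <- fsum_scal by auto.
  f_equal. apply functional_extensionality; intros; ring.
Qed.

Lemma fsum_zero : fsum (fun _ => RtoC 0) = RtoC 0.
Proof. rewrite (fsum_eq_lsumC nil); auto using NoDup_nil. intros g H; now apply H. Qed.

Lemma fsum_conj f : finsupp f -> Cconj (fsum f) = fsum (fun g => Cconj (f g)).
Proof.
  intros [l H]. assert (H' : supp_in l (fun g => Cconj (f g))).
  { intros g Hg. apply H, Cconj_neq0, Hg. }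
  rewrite (fsum_eq_lsumC_nodup _ _ H), (fsum_eq_lsumC_nodup _ _ H'). apply lsumC_conj.
Qed.

Lemma fsum_single f x : (forall g, g <> x -> f g = RtoC 0) -> fsum f = f x.
Proof.
  intros H. rewrite (fsum_eq_lsumC (x :: nil)).
  - rewrite lsumC_cons, lsumC_nil. Cring.
  - repeat constructor; auto.
  - intros g Hg. destruct (classical_eq_dec G g x) as [->|Hne]; [left; auto|].
    exfalso; apply Hg, H, Hne.
Qed.

Lemma fsum_bij (phi psi : G -> G) f :
  (forall x, psi (phi x) = x) -> (forall y, phi (psi y) = y) ->
  finsupp f -> fsum (fun x => f (phi x)) = fsum f.
Proof.
  intros K1 K2 Hf. destruct (finsupp_NoDup f Hf) as [l [N H]].
  rewrite (fsum_eq_lsumC l f), (fsum_eq_lsumC (map psi l)); auto.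
  - rewrite lsumC_map. apply lsumC_ext. intros; rewrite K2; auto.
  - apply FinFun.Injective_map_NoDup; auto. intros x y E. rewrite <- (K2 x), <- (K2 y), E; auto.
  - intros x Hx. rewrite <- (K1 x). apply in_map, H, Hx.
Qed.

Lemma fsum_swap (F : G -> G -> C) l1 l2 :
  (forall x y, F x y <> RtoC 0 -> In x l1 /\ In y l2) ->
  fsum (fun x => fsum (fun y => F x y)) = fsum (fun y => fsum (fun x => F x y)).
Proof.
  intros H.
  assert (I1 : forall x y, F x y <> RtoC 0 -> In x (nodup l1))
    by (intros x y Hx; apply nodup_In, (H x y Hx)).
  assert (I2 : forall x y, F x y <> RtoC 0 -> In y (nodup l2))
    by (intros x y Hx; apply nodup_In, (H x y Hx)).
  assert (E1 : forall x, fsum (fun y => F x y) = lsumC G (nodup l2) (F x))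
    by (intros x; apply fsum_eq_lsumC; [apply NoDup_nodup | intros y Hy; apply (I2 x y Hy)]).
  assert (E2 : forall y, fsum (fun x => F x y) = lsumC G (nodup l1) (fun x => F x y))
    by (intros y; apply fsum_eq_lsumC; [apply NoDup_nodup | intros x Hx; apply (I1 x y Hx)]).
  rewrite (functional_extensionality _ _ E1), (functional_extensionality _ _ E2).
  rewrite (fsum_eq_lsumC (nodup l1)), (fsum_eq_lsumC (nodup l2)); try apply NoDup_nodup.
  - apply lsumC_swap.
  - intros y Hy. destruct (lsumC_neq0 _ _ _ Hy) as [x [_ Hx]]. apply (I2 x y Hx).
  - intros x Hx. destruct (lsumC_neq0 _ _ _ Hx) as [y [_ Hy]]. apply (I1 x y Hy).
Qed.

Lemma finsupp_fsum (F : G -> G -> C) l :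
  (forall h g, F h g <> RtoC 0 -> In h l) -> finsupp (fun h => fsum (F h)).
Proof.
  intros H. exists l. intros h Hh. destruct (excluded_middle_informative (In h l)) as [|Hn]; auto.
  exfalso. apply Hh. transitivity (fsum (fun _ => RtoC 0)); [|apply fsum_zero].
  f_equal. apply functional_extensionality; intros g.
  destruct (excluded_middle_informative (F h g = RtoC 0)); auto. exfalso; eauto.
Qed.

Definition l2sqnorm (xi : G -> C) : R := sup (sumsq_set G xi).

Lemma l2norm_sqrt xi : l2norm xi = sqrt (l2sqnorm xi).
Proof. reflexivity. Qed.

Lemma sqsum_le_of_supp_in l l' xi : NoDup l -> NoDup l' -> supp_in l xi ->
  sqsum l' xi <= sqsum l xi.
Proof.
  intros N N' S. unfold sqsum.
  rewrite (lsumR_filter G l' _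
    (fun g => if excluded_middle_informative (In g l) then true else false)).
  - apply lsumR_incl; [intros; apply pow2_ge_0 | apply NoDup_filter; auto | auto |].
    intros g Hg. apply filter_In in Hg. destruct Hg as [_ Hg].
    destruct (excluded_middle_informative (In g l)); auto; discriminate.
  - intros g Hg. destruct (excluded_middle_informative (In g l)) as [|Hn]; try discriminate.
    destruct (excluded_middle_informative (xi g = RtoC 0)) as [E|E].
    + rewrite E, Cmod_0; ring.
    + exfalso; apply Hn, S, E.
Qed.

Lemma l2sqnorm_supp_in l xi : NoDup l -> supp_in l xi ->
  in_l2 xi /\ l2sqnorm xi = sqsum l xi.
Proof.
  intros N S.
  assert (Hl : is_lub (sumsq_set G xi) (sqsum l xi)).
  { split.
    - intros r [l' [N' ->]]. apply sqsum_le_of_supp_in; auto.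
    - intros b Hb. apply Hb. exists l; auto. }
  split; [exists (sqsum l xi); apply Hl | apply sup_of_is_lub; auto].
Qed.

Lemma l2norm_supp_in l xi : NoDup l -> supp_in l xi -> l2norm xi = sqrt (sqsum l xi).
Proof. intros N S. rewrite l2norm_sqrt. destruct (l2sqnorm_supp_in l xi N S) as [_ ->]; auto. Qed.

Lemma in_l2_finsupp xi : finsupp xi -> in_l2 xi.
Proof. intros H. destruct (finsupp_NoDup xi H) as [l [N S]]. apply (l2sqnorm_supp_in l); auto. Qed.

Lemma sqsum_le_l2sqnorm l xi : in_l2 xi -> NoDup l -> sqsum l xi <= l2sqnorm xi.
Proof. intros B N. apply le_sup; auto. exists l; auto. Qed.

Lemma l2sqnorm_ge0 xi : in_l2 xi -> 0 <= l2sqnorm xi.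
Proof.
  intros B. apply Rle_trans with (sqsum nil xi); [apply sqsum_ge0|].
  apply sqsum_le_l2sqnorm; auto. constructor.
Qed.

Lemma l2sqnorm_le xi (c : R) :
  (forall l, NoDup l -> sqsum l xi <= c) -> in_l2 xi /\ l2sqnorm xi <= c.
Proof.
  intros H. assert (B : in_l2 xi) by (exists c; intros r [l [N ->]]; apply H; auto).
  split; auto. apply sup_le; [exists 0, nil; split; [constructor | reflexivity]|].
  intros r [l [N ->]]. apply H; auto.
Qed.

Lemma l2norm_ge0 xi : 0 <= l2norm xi.
Proof. apply sqrt_pos. Qed.

Lemma l2norm_zero : l2norm (fun _ => RtoC 0) = 0.
Proof.
  rewrite (l2norm_supp_in nil); [|constructor | intros g H; now apply H].
  unfold sqsum; rewrite lsumR_nil; apply sqrt_0.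
Qed.

Lemma l2norm_triangle xi eta : finsupp xi -> finsupp eta ->
  l2norm (fun g => Cplus (xi g) (eta g)) <= l2norm xi + l2norm eta.
Proof.
  intros [l1 H1] [l2 H2].
  assert (S : supp_in (nodup (l1 ++ l2)) (fun g => Cplus (xi g) (eta g))).
  { apply supp_in_nodup. intros g Hg. destruct (Cplus_neq0 _ _ Hg); apply in_or_app; auto. }
  assert (Sx : supp_in (nodup (l1 ++ l2)) xi)
    by (apply supp_in_nodup; intros g Hg; apply in_or_app; auto).
  assert (Se : supp_in (nodup (l1 ++ l2)) eta)
    by (apply supp_in_nodup; intros g Hg; apply in_or_app; auto).
  rewrite !(l2norm_supp_in (nodup (l1 ++ l2))) by (auto; apply NoDup_nodup).
  apply sqsum_Minkowski.
Qed.

Lemma l2norm_scal c xi : finsupp xi -> l2norm (fun g => Cmult c (xi g)) = Cmod c * l2norm xi.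
Proof.
  intros Hx. destruct (finsupp_NoDup xi Hx) as [l [N S]].
  rewrite !(l2norm_supp_in l); auto; [|apply supp_in_mult_r; auto].
  rewrite sqsum_scal, sqrt_mult, sqrt_pow2; auto using Cmod_ge_0, pow2_ge_0, sqsum_ge0.
Qed.

Variables (mul : G -> G -> G) (inv : G -> G) (e : G).
Hypothesis Hgrp : is_group mul inv e.

Lemma mulgA x y z : mul x (mul y z) = mul (mul x y) z. Proof. apply (grp_assoc _ _ _ Hgrp). Qed.
Lemma mul1g x : mul e x = x. Proof. apply (grp_id_l _ _ _ Hgrp). Qed.
Lemma mulVg x : mul (inv x) x = e. Proof. apply (grp_inv_l _ _ _ Hgrp). Qed.

Lemma mulgV x : mul x (inv x) = e.
Proof.
  rewrite <- (mul1g (mul x (inv x))), <- (mulVg (inv x)) at 1.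
  rewrite <- mulgA, (mulgA (inv x) x (inv x)), mulVg, mul1g. apply mulVg.
Qed.

Lemma mulg1 x : mul x e = x. Proof. rewrite <- (mulVg x), mulgA, mulgV, mul1g; auto. Qed.

Lemma mulgI g x y : mul g x = mul g y -> x = y.
Proof. intros H. rewrite <- (mul1g x), <- (mul1g y), <- (mulVg g), <- !mulgA, H; auto. Qed.

Lemma mulKg g x : mul (inv g) (mul g x) = x. Proof. rewrite mulgA, mulVg, mul1g; auto. Qed.
Lemma mulKVg g x : mul g (mul (inv g) x) = x. Proof. rewrite mulgA, mulgV, mul1g; auto. Qed.
Lemma invgK x : inv (inv x) = x. Proof. apply (mulgI (inv x)). rewrite mulgV, mulVg; auto. Qed.

Lemma invMg x y : inv (mul x y) = mul (inv y) (inv x).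
Proof. apply (mulgI (mul x y)). rewrite mulgV, <- mulgA, (mulgA y), mulgV, mul1g, mulgV; auto. Qed.

Lemma invg1 : inv e = e. Proof. rewrite <- (mul1g (inv e)). apply mulgV. Qed.

Lemma fsum_mul_l f h : finsupp f -> fsum (fun x => f (mul h x)) = fsum f.
Proof. apply fsum_bij with (psi := mul (inv h)); intros; [apply mulKg | apply mulKVg]. Qed.

Lemma fsum_inv f : finsupp f -> fsum (fun x => f (inv x)) = fsum f.
Proof. apply fsum_bij with (psi := inv); intros; apply invgK. Qed.

Local Notation lam := (lambda G mul inv).
Local Notation conv := (gconv G mul inv).
Local Notation star := (gstar G inv).

Definition supp_list a : list G := epsilon (inhabits nil) (fun l => NoDup l /\ supp_in l a).

Lemma supp_list_spec a : finsupp a -> NoDup (supp_list a) /\ supp_in (supp_list a) a.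
Proof.
  intros H. apply (epsilon_spec (inhabits nil) (fun l => NoDup l /\ supp_in l a)), finsupp_NoDup, H.
Qed.

Definition l1norm a : R := lsumR G (supp_list a) (fun h => Cmod (a h)).

Lemma l1norm_ge0 a : 0 <= l1norm a.
Proof. apply lsumR_ge0; intros; apply Cmod_ge_0. Qed.

Lemma lambda_lsumC l a xi g : NoDup l -> supp_in l a ->
  lam a xi g = lsumC G l (fun h => Cmult (a h) (xi (mul (inv h) g))).
Proof. intros N S. apply fsum_eq_lsumC; auto. apply supp_in_mult_l; auto. Qed.

Lemma sqsum_translate l xi h : sqsum l (fun g => xi (mul h g)) = sqsum (map (mul h) l) xi.
Proof. unfold sqsum. rewrite lsumR_map; auto. Qed.

Lemma NoDup_map_mul h l : NoDup l -> NoDup (map (mul h) l).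
Proof. apply FinFun.Injective_map_NoDup. intros x y; apply mulgI. Qed.

(* Minkowski over the finitely many translates making up [lam a xi] *)
Lemma sqsum_lambda_le a xi l : finsupp a -> in_l2 xi -> NoDup l ->
  sqrt (sqsum l (lam a xi)) <= l1norm a * l2norm xi.
Proof.
  intros Ha Hx N. destruct (supp_list_spec a Ha) as [NL SL].
  replace (sqsum l (lam a xi)) with
    (sqsum l (fun g => lsumC G (supp_list a) (fun h => Cmult (a h) (xi (mul (inv h) g)))))
    by (apply lsumR_ext; intros g _; rewrite (lambda_lsumC (supp_list a)); auto).
  eapply Rle_trans; [apply sqsum_Minkowski_sum|].
  unfold l1norm. rewrite Rmult_comm, <- lsumR_scal. apply lsumR_le. intros h _.
  rewrite sqsum_scal, sqrt_mult, sqrt_pow2 by auto using pow2_ge_0, sqsum_ge0, Cmod_ge_0.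
  rewrite Rmult_comm. apply Rmult_le_compat_r; [apply Cmod_ge_0|].
  rewrite sqsum_translate, l2norm_sqrt. apply sqrt_le_1_alt, sqsum_le_l2sqnorm; auto.
  apply NoDup_map_mul; auto.
Qed.

Lemma lambda_l2 a xi : finsupp a -> in_l2 xi ->
  in_l2 (lam a xi) /\ l2norm (lam a xi) <= l1norm a * l2norm xi.
Proof.
  intros Ha Hx.
  assert (H0 : 0 <= l1norm a * l2norm xi)
    by (apply Rmult_le_pos; auto using l1norm_ge0, l2norm_ge0).
  destruct (l2sqnorm_le (lam a xi) ((l1norm a * l2norm xi) ^ 2)) as [H1 H2].
  { intros l N. pose proof (sqsum_lambda_le a xi l Ha Hx N).
    rewrite <- (sqrt_sqrt (sqsum l (lam a xi))) by apply sqsum_ge0.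
    pose proof (sqrt_pos (sqsum l (lam a xi))). nra. }
  split; auto. rewrite l2norm_sqrt, <- (sqrt_pow2 (l1norm a * l2norm xi)) by auto.
  apply sqrt_le_1_alt; auto.
Qed.

Definition mul_list (l1 l2 : list G) : list G := flat_map (fun h => map (mul h) l2) l1.

Lemma in_mul_list l1 l2 h k : In h l1 -> In k l2 -> In (mul h k) (mul_list l1 l2).
Proof. intros H1 H2. apply in_flat_map. exists h; split; auto. apply in_map; auto. Qed.

Lemma lambda_supp_in l1 l2 a xi : supp_in l1 a -> supp_in l2 xi ->
  supp_in (mul_list l1 l2) (lam a xi).
Proof.
  intros Ha Hx g Hg. destruct (finsupp_NoDup a (ex_intro _ l1 Ha)) as [L [N S]].
  rewrite (lambda_lsumC L) in Hg; auto.
  destruct (lsumC_neq0 _ _ _ Hg) as [h [_ Hh]]. apply Cmult_neq0 in Hh.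
  rewrite <- (mulKVg h g). apply in_mul_list; apply Ha || apply Hx; tauto.
Qed.

Lemma lambda_finsupp a xi : finsupp a -> finsupp xi -> finsupp (lam a xi).
Proof. intros [l1 H1] [l2 H2]. exists (mul_list l1 l2). apply lambda_supp_in; auto. Qed.

Lemma gconv_finsupp a b : finsupp a -> finsupp b -> finsupp (conv a b).
Proof. apply lambda_finsupp. Qed.

Lemma gstar_finsupp a : finsupp a -> finsupp (star a).
Proof.
  intros [l H]. exists (map inv l). intros g Hg.
  rewrite <- (invgK g). apply in_map, H, Cconj_neq0, Hg.
Qed.

Lemma gstarK a : star (star a) = a.
Proof.
  apply functional_extensionality; intros g. unfold gstar, Defs.Cconj. rewrite invgK.
  destruct (a g); simpl; rewrite Ropp_involutive; reflexivity.
Qed.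

Lemma lambda_plus_r a xi eta : finsupp a ->
  lam a (fun g => Cplus (xi g) (eta g)) = fun g => Cplus (lam a xi g) (lam a eta g).
Proof.
  intros Ha. apply functional_extensionality; intros g. unfold lambda.
  rewrite <- fsum_plus by (apply finsupp_mult_l; auto). f_equal.
  apply functional_extensionality; intros h. Cring.
Qed.

Lemma lambda_scal_r a c xi : finsupp a ->
  lam a (fun g => Cmult c (xi g)) = fun g => Cmult c (lam a xi g).
Proof.
  intros Ha. apply functional_extensionality; intros g. unfold lambda.
  rewrite <- fsum_scal by (apply finsupp_mult_l; auto). f_equal.
  apply functional_extensionality; intros h. Cring.
Qed.

Lemma lambda_plus_l a b xi : finsupp a -> finsupp b ->
  lam (fun g => Cplus (a g) (b g)) xi = fun g => Cplus (lam a xi g) (lam b xi g).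
Proof.
  intros Ha Hb. apply functional_extensionality; intros g. unfold lambda.
  rewrite <- fsum_plus by (apply finsupp_mult_l; auto). f_equal.
  apply functional_extensionality; intros h. Cring.
Qed.

Lemma lambda_scal_l a c xi : finsupp a ->
  lam (fun g => Cmult c (a g)) xi = fun g => Cmult c (lam a xi g).
Proof.
  intros Ha. apply functional_extensionality; intros g. unfold lambda.
  rewrite <- fsum_scal by (apply finsupp_mult_l; auto). f_equal.
  apply functional_extensionality; intros h. Cring.
Qed.

Lemma lambda_gconv a b xi : finsupp a -> finsupp b -> lam (conv a b) xi = lam a (lam b xi).
Proof.
  intros Ha Hb. destruct (finsupp_NoDup a Ha) as [La [NA SA]].
  destruct (finsupp_NoDup b Hb) as [Lb [NB SB]].
  apply functional_extensionality; intros g.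
  set (Lab := nodup (mul_list La Lb)).
  assert (NAB : NoDup Lab) by apply NoDup_nodup.
  assert (SAB : supp_in Lab (conv a b)) by (apply supp_in_nodup, lambda_supp_in; auto).
  rewrite (lambda_lsumC Lab), (lambda_lsumC La) by auto.
  transitivity (lsumC G Lab (fun k => lsumC G La
    (fun h => Cmult (a h) (Cmult (b (mul (inv h) k)) (xi (mul (inv k) g)))))).
  { apply lsumC_ext. intros k _. unfold gconv. rewrite (fsum_eq_lsumC La) by
      (auto; apply supp_in_mult_l; auto).
    rewrite <- (Cmult_comm (xi _)), <- lsumC_scal. apply lsumC_ext; intros; Cring. }
  rewrite lsumC_swap. apply lsumC_ext. intros h Hh. rewrite lsumC_scal. f_equal.
  rewrite (lambda_lsumC Lb) by auto.
  assert (SLab : supp_in Lab (fun k => Cmult (b (mul (inv h) k)) (xi (mul (inv k) g)))).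
  { intros k Hk. apply Cmult_neq0 in Hk. apply nodup_In. rewrite <- (mulKVg h k).
    apply in_mul_list; [auto | apply SB; tauto]. }
  rewrite <- (fsum_eq_lsumC Lab) by auto.
  rewrite <- (fsum_eq_lsumC Lb) by (auto; apply supp_in_mult_l; auto).
  rewrite <- (fsum_mul_l _ h).
  - f_equal. apply functional_extensionality; intros k. rewrite mulKg, invMg, mulgA; auto.
  - exists (map (mul h) Lb). intros k Hk. apply Cmult_neq0 in Hk.
    rewrite <- (mulKVg h k). apply in_map, SB; tauto.
Qed.

Definition inner xi eta : C := fsum (fun g => Cmult (xi g) (Cconj (eta g))).

Lemma inner_self xi : finsupp xi -> inner xi xi = RtoC (l2norm xi ^ 2).
Proof.
  intros H. destruct (finsupp_NoDup xi H) as [l [N S]].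
  unfold inner. rewrite (fsum_eq_lsumC l), (l2norm_supp_in l) by
    (auto; apply supp_in_mult_l; auto).
  rewrite pow2_sqrt by apply sqsum_ge0. apply lsumC_mult_conj.
Qed.

Lemma inner_CauchySchwarz xi eta : finsupp xi -> finsupp eta ->
  Cmod (inner xi eta) <= l2norm xi * l2norm eta.
Proof.
  intros [l1 H1] [l2 H2].
  set (l := nodup (l1 ++ l2)).
  assert (N : NoDup l) by apply NoDup_nodup.
  assert (S1 : supp_in l xi) by (apply supp_in_nodup; intros g Hg; apply in_or_app; auto).
  assert (S2 : supp_in l eta) by (apply supp_in_nodup; intros g Hg; apply in_or_app; auto).
  unfold inner. rewrite (fsum_eq_lsumC l), !(l2norm_supp_in l) by
    (auto; apply supp_in_mult_l; auto).
  eapply Rle_trans; [apply Cmod_lsumC_le | eapply Rle_trans; [|apply lsumR_CauchySchwarz]].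
  right. apply lsumR_ext. intros. rewrite Cmod_mult, Cmod_conj; auto.
Qed.

Lemma inner_lambda_r a zeta eta : finsupp a -> finsupp zeta -> finsupp eta ->
  inner zeta (lam a eta) = inner (lam (star a) zeta) eta.
Proof.
  intros Ha Hz He.
  destruct Ha as [La SA]. destruct Hz as [Lz SZ]. destruct He as [Le SE].
  assert (SA' : supp_in (map inv La) (star a))
    by (intros h Hh; rewrite <- (invgK h); apply in_map, SA, Cconj_neq0, Hh).
  unfold inner.
  transitivity (fsum (fun g => fsum (fun h =>
    Cmult (zeta g) (Cconj (Cmult (a h) (eta (mul (inv h) g))))))).
  { f_equal. apply functional_extensionality; intros g. unfold lambda.
    rewrite fsum_conj, <- fsum_scal; [auto | |apply finsupp_mult_l; exists La; auto].
    exists La. intros h Hh. apply SA, (Cmult_neq0 _ _ (Cconj_neq0 _ Hh)). }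
  transitivity (fsum (fun g => fsum (fun h =>
    Cmult (Cmult (star a h) (zeta (mul (inv h) g))) (Cconj (eta g))))).
  2:{ f_equal. apply functional_extensionality; intros g. unfold lambda.
      rewrite fsum_scal_r; auto. apply finsupp_mult_l. exists (map inv La); auto. }
  rewrite (fsum_swap _ Lz La).
  2:{ intros g h Hgh. apply Cmult_neq0 in Hgh. destruct Hgh as [H1 H2].
      split; [apply SZ; auto | apply SA, (Cmult_neq0 _ _ (Cconj_neq0 _ H2))]. }
  symmetry. rewrite (fsum_swap _ Le (map inv La)).
  2:{ intros g h Hgh. apply Cmult_neq0 in Hgh. destruct Hgh as [H1 H2].
      split; [apply SE, Cconj_neq0, H2 | apply SA', (Cmult_neq0 _ _ H1)]. }
  transitivity (fsum (fun h => fsum (fun g =>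
    Cmult (Cmult (star a h) (zeta g)) (Cconj (eta (mul h g)))))).
  { f_equal. apply functional_extensionality; intros h.
    rewrite <- (fsum_mul_l _ h).
    - f_equal. apply functional_extensionality; intros g. rewrite mulKg; auto.
    - exists Le. intros g Hg. apply SE, Cconj_neq0, (Cmult_neq0 _ _ Hg). }
  rewrite <- fsum_inv.
  2:{ apply (finsupp_fsum _ (map inv La)). intros h g Hhg.
      apply SA', (Cmult_neq0 _ _ (proj1 (Cmult_neq0 _ _ Hhg))). }
  f_equal. apply functional_extensionality; intros h. f_equal.
  apply functional_extensionality; intros g. unfold gstar. rewrite invgK, Cmult_conj.
  Cring.
Qed.

Lemma l2norm_lambda_sq_le a eta : finsupp a -> finsupp eta ->
  l2norm (lam a eta) ^ 2 <= l2norm (lam (star a) (lam a eta)) * l2norm eta.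
Proof.
  intros Ha He. assert (Hl : finsupp (lam a eta)) by (apply lambda_finsupp; auto).
  pose proof (inner_lambda_r a (lam a eta) eta Ha Hl He) as E.
  rewrite inner_self in E by auto.
  rewrite <- (Rabs_right (l2norm (lam a eta) ^ 2)), <- Cmod_R, E by (apply Rle_ge, pow2_ge_0).
  apply inner_CauchySchwarz; auto. apply lambda_finsupp; auto. apply gstar_finsupp; auto.
Qed.

Lemma l2norm_lambda_le_reduced_norm a xi : finsupp a -> in_l2 xi -> l2norm xi <= 1 ->
  l2norm (lam a xi) <= reduced_norm G mul inv a.
Proof.
  intros Ha H1 H2. apply le_sup; [|exists xi; auto].
  exists (l1norm a). intros r [xi' [H1' [H2' ->]]].
  destruct (lambda_l2 a xi' Ha H1') as [_ H]. pose proof (l1norm_ge0 a).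
  pose proof (l2norm_ge0 xi'). nra.
Qed.

Definition delta (x : G) : G -> C :=
  fun g => if excluded_middle_informative (g = x) then RtoC 1 else RtoC 0.

Lemma delta_eq x : delta x x = RtoC 1.
Proof. unfold delta. destruct (excluded_middle_informative (x = x)); tauto. Qed.

Lemma delta_neq x g : g <> x -> delta x g = RtoC 0.
Proof. intros H. unfold delta. destruct (excluded_middle_informative (g = x)); tauto. Qed.

Lemma delta_finsupp x : finsupp (delta x).
Proof.
  exists (x :: nil). intros g Hg. destruct (classical_eq_dec G g x) as [->|Hne]; [left; auto|].
  exfalso. apply Hg, delta_neq, Hne.
Qed.

(** * The arc norm of a central element *)

Section CentralElement.
Variable z : G.
Hypothesis z_central : forall g, mul z g = mul g z.

(* [ztrans xi] is [lam (delta z) xi] *)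
Definition ztrans xi : G -> C := fun g => xi (mul (inv z) g).

Definition eig_defect (t : C) eta : G -> C := fun g => Cminus (ztrans eta g) (Cmult t (eta g)).

Definition almost_eigvec (eps : R) eta : Prop :=
  finsupp eta /\ l2norm eta <= 1 /\ exists t, left_arc t /\ l2norm (eig_defect t eta) <= eps.

Definition arc_bound a (eps : R) : R :=
  sup (fun r => exists eta, almost_eigvec eps eta /\ r = l2norm (lam a eta)).

(* the infimum of [arc_bound a eps] over [eps > 0] *)
Definition arc_norm a : R := - sup (fun r => exists eps, 0 < eps /\ r = - arc_bound a eps).

Lemma inv_z_central g : mul (inv z) g = mul g (inv z).
Proof.
  apply (mulgI z). rewrite mulKVg, z_central, <- mulgA, mulVg, mulg1; auto.
Qed.

Lemma lambda_ztrans a xi : lam a (ztrans xi) = ztrans (lam a xi).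
Proof.
  apply functional_extensionality; intros g. unfold lambda, ztrans. f_equal.
  apply functional_extensionality; intros h. rewrite !mulgA, (inv_z_central (inv h)); auto.
Qed.

Lemma ztrans_finsupp xi : finsupp xi -> finsupp (ztrans xi).
Proof.
  intros [l H]. exists (map (mul z) l). intros g Hg. rewrite <- (mulKVg z g). apply in_map, H, Hg.
Qed.

Lemma eig_defect_finsupp t eta : finsupp eta -> finsupp (eig_defect t eta).
Proof.
  intros Hx. destruct (ztrans_finsupp eta Hx) as [l1 H1]. destruct Hx as [l2 H2].
  exists (l1 ++ l2). intros g Hg. apply in_or_app.
  destruct (excluded_middle_informative (ztrans eta g = RtoC 0)) as [E|E]; auto.
  right. apply H2. intros E2. apply Hg. unfold eig_defect. rewrite E, E2. Cring.
Qed.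

Lemma eig_defect_lambda t b eta : finsupp b -> eig_defect t (lam b eta) = lam b (eig_defect t eta).
Proof.
  intros Hb. unfold eig_defect.
  replace (fun g => Cminus (ztrans eta g) (Cmult t (eta g))) with
    (fun g => Cplus (ztrans eta g) (Cmult (Copp t) (eta g)))
    by (apply functional_extensionality; intros; ring).
  rewrite lambda_plus_r, lambda_scal_r, lambda_ztrans by auto.
  apply functional_extensionality; intros; ring.
Qed.

Lemma eig_defect_scal t c eta :
  eig_defect t (fun g => Cmult c (eta g)) = fun g => Cmult c (eig_defect t eta g).
Proof. apply functional_extensionality; intros; unfold eig_defect, ztrans; ring. Qed.

Lemma almost_eigvec_zero eps : 0 <= eps -> almost_eigvec eps (fun _ => RtoC 0).
Proof.
  intros He. split; [apply finsupp_zero|]. split; [rewrite l2norm_zero; lra|].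
  exists (RtoC (-1)). split; [apply left_arc_m1|].
  replace (eig_defect (RtoC (-1)) (fun _ => RtoC 0)) with (fun _ : G => RtoC 0)
    by (apply functional_extensionality; intros; unfold eig_defect, ztrans; ring).
  rewrite l2norm_zero; auto.
Qed.

Lemma almost_eigvec_mono eps1 eps2 eta : eps1 <= eps2 ->
  almost_eigvec eps1 eta -> almost_eigvec eps2 eta.
Proof. intros H [H1 [H2 [t [Ht Hd]]]]. repeat split; auto. exists t; split; auto; lra. Qed.

Lemma l2norm_lambda_almost_eigvec a eps eta : finsupp a -> almost_eigvec eps eta ->
  l2norm (lam a eta) <= l1norm a.
Proof.
  intros Ha [Hf [Hn _]]. destruct (lambda_l2 a eta Ha (in_l2_finsupp eta Hf)) as [_ H].
  pose proof (l1norm_ge0 a). pose proof (l2norm_ge0 eta). nra.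
Qed.

Lemma le_arc_bound a eps eta : finsupp a -> almost_eigvec eps eta ->
  l2norm (lam a eta) <= arc_bound a eps.
Proof.
  intros Ha H. apply le_sup; [|exists eta; auto].
  exists (l1norm a). intros r [eta' [Heta ->]]. apply (l2norm_lambda_almost_eigvec a eps); auto.
Qed.

Lemma arc_bound_le a eps (c : R) : 0 <= eps ->
  (forall eta, almost_eigvec eps eta -> l2norm (lam a eta) <= c) -> arc_bound a eps <= c.
Proof.
  intros He H. apply sup_le; [|intros r [eta [Hx ->]]; auto].
  exists (l2norm (lam a (fun _ => RtoC 0))), (fun _ => RtoC 0). split; auto.
  apply almost_eigvec_zero; auto.
Qed.

Lemma arc_bound_ge0 a eps : finsupp a -> 0 <= eps -> 0 <= arc_bound a eps.
Proof.
  intros Ha He. eapply Rle_trans; [apply l2norm_ge0|].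
  apply (le_arc_bound a eps (fun _ => RtoC 0)); auto. apply almost_eigvec_zero; auto.
Qed.

Lemma arc_bound_mono a eps1 eps2 : finsupp a -> 0 <= eps1 -> eps1 <= eps2 ->
  arc_bound a eps1 <= arc_bound a eps2.
Proof.
  intros Ha H1 H2. apply arc_bound_le; auto. intros eta Heta.
  apply le_arc_bound; auto. apply (almost_eigvec_mono eps1); auto.
Qed.

Lemma arc_norm_le_arc_bound a eps : finsupp a -> 0 < eps -> arc_norm a <= arc_bound a eps.
Proof.
  intros Ha He. unfold arc_norm.
  enough (- arc_bound a eps <= sup (fun r => exists eps, 0 < eps /\ r = - arc_bound a eps)) by lra.
  apply le_sup; [|exists eps; auto].
  exists 0. intros r [eps' [He' ->]]. pose proof (arc_bound_ge0 a eps' Ha). lra.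
Qed.

Lemma le_arc_norm a (c : R) : (forall eps, 0 < eps -> c <= arc_bound a eps) -> c <= arc_norm a.
Proof.
  intros H. unfold arc_norm.
  enough (sup (fun r => exists eps, 0 < eps /\ r = - arc_bound a eps) <= - c) by lra.
  apply sup_le; [exists (- arc_bound a 1), 1; split; auto; lra|].
  intros r [eps [He ->]]. specialize (H eps He). lra.
Qed.

Lemma arc_norm_ge0 a : finsupp a -> 0 <= arc_norm a.
Proof. intros Ha. apply le_arc_norm. intros; apply arc_bound_ge0; auto; lra. Qed.

Lemma arc_norm_approx a d : finsupp a -> 0 < d ->
  exists eps, 0 < eps /\
    forall eps', 0 <= eps' -> eps' <= eps -> arc_bound a eps' <= arc_norm a + d.
Proof.
  intros Ha Hd.
  assert (B : bound (fun r => exists eps, 0 < eps /\ r = - arc_bound a eps)).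
  { exists 0. intros r [eps [He ->]]. pose proof (arc_bound_ge0 a eps Ha). lra. }
  destruct (sup_approx _ d B (ex_intro _ _ (ex_intro _ 1 (conj Rlt_0_1 eq_refl))) Hd)
    as [r [[eps [He ->]] Hr]].
  exists eps. split; auto. intros eps' H1 H2.
  pose proof (arc_bound_mono a eps' eps Ha H1 H2). unfold arc_norm. lra.
Qed.

Lemma arc_norm_le a (c : R) : finsupp a ->
  (forall gam, 0 < gam -> exists eps, 0 < eps /\ arc_bound a eps <= c + gam) -> arc_norm a <= c.
Proof.
  intros Ha H. apply le_epsilon. intros gam Hg.
  destruct (H gam Hg) as [eps [He HM]]. pose proof (arc_norm_le_arc_bound a eps Ha He). lra.
Qed.

(* Normalising [zeta] turns a small eigenvalue defect into an almost eigenvector, unless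
   [zeta] itself is shorter than [delta]. *)
Lemma l2norm_lambda_le_arc_bound a zeta t (delta : R) :
  finsupp a -> finsupp zeta -> left_arc t -> 0 < delta ->
  l2norm (lam a zeta) <=
  Rmax (l1norm a * delta) (l2norm zeta * arc_bound a (l2norm (eig_defect t zeta) / delta)).
Proof.
  intros Ha Hz Ht Hd. set (n := l2norm zeta).
  destruct (Rle_dec n delta) as [Hn|Hn].
  - apply Rle_trans with (l1norm a * delta); [|apply Rmax_l].
    destruct (lambda_l2 a zeta Ha (in_l2_finsupp zeta Hz)) as [_ H].
    pose proof (l1norm_ge0 a). fold n in H. nra.
  - apply Rle_trans with (n * arc_bound a (l2norm (eig_defect t zeta) / delta)); [|apply Rmax_r].
    assert (Hn0 : 0 < n) by lra.
    set (c := RtoC (/ n)).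
    assert (Hc : Cmod c = / n) by (unfold c; rewrite Cmod_R; apply Rabs_right; left;
      apply Rinv_0_lt_compat; auto).
    assert (Hdef : 0 <= l2norm (eig_defect t zeta)) by apply l2norm_ge0.
    assert (Adm : almost_eigvec (l2norm (eig_defect t zeta) / delta) (fun g => Cmult c (zeta g))).
    { split; [apply finsupp_scal; auto|]. split.
      - rewrite l2norm_scal, Hc by auto. fold n. rewrite Rinv_l; lra.
      - exists t. split; auto.
        rewrite eig_defect_scal, l2norm_scal, Hc by (apply eig_defect_finsupp; auto).
        unfold Rdiv. rewrite Rmult_comm. apply Rmult_le_compat_l; auto.
        apply Rinv_le_contravar; lra. }
    pose proof (le_arc_bound a _ _ Ha Adm) as HM.
    rewrite lambda_scal_r, l2norm_scal, Hc in HM by (auto; apply lambda_finsupp; auto).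
    apply Rmult_le_compat_l with (r := n) in HM; [|lra].
    rewrite <- Rmult_assoc, Rinv_r, Rmult_1_l in HM; lra.
Qed.

Lemma arc_bound_gconv_le a b eps (delta : R) : finsupp a -> finsupp b -> 0 <= eps -> 0 < delta ->
  arc_bound (conv a b) eps <=
  Rmax (l1norm a * delta) (arc_bound b eps * arc_bound a (l1norm b * eps / delta)).
Proof.
  intros Ha Hb He Hd. apply arc_bound_le; auto. intros eta Heta.
  destruct Heta as [Hfe [Hne [t [Ht Hdef]]]].
  assert (Heta : almost_eigvec eps eta) by (repeat split; auto; exists t; auto).
  set (zeta := lam b eta).
  assert (Hz : finsupp zeta) by (apply lambda_finsupp; auto).
  assert (Hzn : l2norm zeta <= arc_bound b eps) by (apply le_arc_bound; auto).
  assert (Hzd : l2norm (eig_defect t zeta) <= l1norm b * eps).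
  { unfold zeta. rewrite eig_defect_lambda by auto.
    destruct (lambda_l2 b _ Hb (in_l2_finsupp _ (eig_defect_finsupp t eta Hfe))) as [_ H].
    pose proof (l1norm_ge0 b). nra. }
  assert (HMa : arc_bound a (l2norm (eig_defect t zeta) / delta) <=
                arc_bound a (l1norm b * eps / delta)).
  { apply arc_bound_mono; auto.
    - apply Rmult_le_pos; [apply l2norm_ge0 | left; apply Rinv_0_lt_compat; auto].
    - apply Rmult_le_compat_r; auto. left; apply Rinv_0_lt_compat; auto. }
  assert (HMa0 : 0 <= arc_bound a (l2norm (eig_defect t zeta) / delta)).
  { apply arc_bound_ge0; auto.
    apply Rmult_le_pos; [apply l2norm_ge0 | left; apply Rinv_0_lt_compat; auto]. }
  rewrite lambda_gconv by auto.
  eapply Rle_trans; [apply (l2norm_lambda_le_arc_bound a zeta t delta); auto|].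
  apply Rle_max_compat_l. pose proof (l2norm_ge0 zeta).
  apply Rmult_le_compat; auto.
Qed.

Lemma arc_bound_gstar_le a eps (delta : R) : finsupp a -> 0 <= eps -> 0 < delta ->
  arc_bound (star a) eps <=
  Rmax (sqrt (l1norm a * delta)) (arc_bound a (l1norm (star a) * eps / delta)).
Proof.
  intros Ha He Hd. assert (Hsa : finsupp (star a)) by (apply gstar_finsupp; auto).
  apply arc_bound_le; auto. intros eta [Hfe [Hne [t [Ht Hdef]]]].
  set (zeta := lam (star a) eta).
  assert (Hz : finsupp zeta) by (apply lambda_finsupp; auto).
  assert (Hzd : l2norm (eig_defect t zeta) <= l1norm (star a) * eps).
  { unfold zeta. rewrite eig_defect_lambda by auto.
    destruct (lambda_l2 _ _ Hsa (in_l2_finsupp _ (eig_defect_finsupp t eta Hfe))) as [_ H].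
    pose proof (l1norm_ge0 (star a)). nra. }
  assert (Hsq : l2norm zeta ^ 2 <= l2norm (lam a zeta)).
  { pose proof (l2norm_lambda_sq_le (star a) eta Hsa Hfe) as H. rewrite gstarK in H.
    pose proof (l2norm_ge0 (lam a zeta)). fold zeta in H. nra. }
  assert (Hdd : 0 <= l2norm (eig_defect t zeta) / delta)
    by (apply Rmult_le_pos; [apply l2norm_ge0 | left; apply Rinv_0_lt_compat; auto]).
  assert (HMa : arc_bound a (l2norm (eig_defect t zeta) / delta) <=
                arc_bound a (l1norm (star a) * eps / delta)).
  { apply arc_bound_mono; auto. apply Rmult_le_compat_r; auto. left; apply Rinv_0_lt_compat; auto. }
  pose proof (l2norm_lambda_le_arc_bound a zeta t delta Ha Hz Ht Hd) as Hlam.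
  apply le_Rmax_sqrt; auto using l2norm_ge0, arc_bound_ge0.
  - apply arc_bound_ge0; auto.
    apply Rmult_le_pos; [apply Rmult_le_pos; [apply l1norm_ge0 | auto] |].
    left; apply Rinv_0_lt_compat; auto.
  - apply Rmult_le_pos; [apply l1norm_ge0 | lra].
  - eapply Rle_trans; [apply Hsq|]. eapply Rle_trans; [apply Hlam|].
    apply Rle_max_compat_l, Rmult_le_compat_l; auto using l2norm_ge0.
Qed.

Lemma arc_norm_triangle a b : finsupp a -> finsupp b ->
  arc_norm (fun g => Cplus (a g) (b g)) <= arc_norm a + arc_norm b.
Proof.
  intros Ha Hb. apply arc_norm_le; [apply finsupp_plus; auto|]. intros gam Hg.
  destruct (arc_norm_approx a (gam / 2) Ha ltac:(lra)) as [ea [Hea Ha']].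
  destruct (arc_norm_approx b (gam / 2) Hb ltac:(lra)) as [eb [Heb Hb']].
  set (eps := Rmin ea eb).
  assert (He : 0 < eps) by (apply Rmin_glb_lt; auto).
  pose proof (Rmin_l ea eb). pose proof (Rmin_r ea eb).
  exists eps. split; auto.
  apply Rle_trans with (arc_bound a eps + arc_bound b eps);
    [|specialize (Ha' eps ltac:(lra) ltac:(auto)); specialize (Hb' eps ltac:(lra) ltac:(auto));
      lra].
  apply arc_bound_le; [lra|]. intros eta Heta.
  rewrite lambda_plus_l by auto.
  eapply Rle_trans; [apply l2norm_triangle; apply lambda_finsupp; auto; apply Heta|].
  apply Rplus_le_compat; apply le_arc_bound; auto.
Qed.

Lemma arc_norm_scal_le c a : finsupp a -> arc_norm (fun g => Cmult c (a g)) <= Cmod c * arc_norm a.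
Proof.
  intros Ha. apply arc_norm_le; [apply finsupp_scal; auto|]. intros gam Hg.
  pose proof (Cmod_ge_0 c). destruct (Rmult_div_succ_le (Cmod c) gam) as [Hd Hcd]; auto.
  destruct (arc_norm_approx a (gam / (Cmod c + 1)) Ha Hd) as [ea [Hea Ha']].
  exists ea. split; auto. specialize (Ha' ea ltac:(lra) ltac:(lra)).
  apply Rle_trans with (Cmod c * arc_bound a ea).
  - apply arc_bound_le; [lra|]. intros eta Heta.
    rewrite lambda_scal_l, l2norm_scal by (auto; apply lambda_finsupp; auto; apply Heta).
    apply Rmult_le_compat_l, le_arc_bound; auto.
  - apply Rmult_le_compat_l with (r := Cmod c) in Ha'; auto. nra.
Qed.

Lemma arc_norm_scal c a : finsupp a -> arc_norm (fun g => Cmult c (a g)) = Cmod c * arc_norm a.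
Proof.
  intros Ha. apply Rle_antisym; [apply arc_norm_scal_le; auto|].
  destruct (excluded_middle_informative (c = RtoC 0)) as [->|Hc].
  - rewrite Cmod_0, Rmult_0_l. apply arc_norm_ge0, finsupp_scal; auto.
  - pose proof (arc_norm_scal_le (Cinv c) _ (finsupp_scal c a Ha)) as H. cbv beta in H.
    replace (fun g => Cmult (Cinv c) (Cmult c (a g))) with a in H
      by (apply functional_extensionality; intros; field; auto).
    rewrite Cmod_inv in H by auto. apply Cmod_gt_0 in Hc.
    apply Rmult_le_compat_l with (r := Cmod c) in H; [|lra].
    rewrite <- Rmult_assoc, Rinv_r, Rmult_1_l in H by lra; lra.
Qed.

Lemma arc_norm_submult a b : finsupp a -> finsupp b ->
  arc_norm (conv a b) <= arc_norm a * arc_norm b.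
Proof.
  intros Ha Hb. apply arc_norm_le; [apply gconv_finsupp; auto|]. intros gam Hg.
  pose proof (arc_norm_ge0 a Ha). pose proof (arc_norm_ge0 b Hb).
  pose proof (l1norm_ge0 b).
  destruct (Rmult_div_succ_le (l1norm a) gam (l1norm_ge0 a) Hg) as [Hd Had].
  set (delta := gam / (l1norm a + 1)) in *.
  destruct (Rmult_plus_small_le (arc_norm b) (arc_norm a) gam) as [rho [Hr Hrho]]; auto.
  destruct (arc_norm_approx a rho Ha Hr) as [ea [Hea Ha']].
  destruct (arc_norm_approx b rho Hb Hr) as [eb [Heb Hb']].
  destruct (Rmult_div_succ_le (l1norm b) (ea * delta)) as [He2 Hbe]; auto; [nra|].
  set (eps := Rmin eb (ea * delta / (l1norm b + 1))) in *.
  assert (He : 0 < eps) by (apply Rmin_glb_lt; auto).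
  assert (Heb' : eps <= eb) by apply Rmin_l.
  assert (Hea' : l1norm b * eps / delta <= ea).
  { apply Rmult_le_reg_r with delta; auto.
    unfold Rdiv. rewrite Rmult_assoc, Rinv_l, Rmult_1_r by lra.
    apply Rle_trans with (l1norm b * (ea * delta / (l1norm b + 1))); auto.
    apply Rmult_le_compat_l, Rmin_r; auto. }
  assert (Hbd : 0 <= l1norm b * eps / delta)
    by (apply Rmult_le_pos; [apply Rmult_le_pos; lra | left; apply Rinv_0_lt_compat; auto]).
  specialize (Ha' _ Hbd Hea'). specialize (Hb' eps ltac:(lra) Heb').
  pose proof (arc_bound_ge0 a _ Ha Hbd). pose proof (arc_bound_ge0 b eps Hb ltac:(lra)).
  exists eps. split; auto.
  eapply Rle_trans; [apply (arc_bound_gconv_le a b eps delta); auto; lra|].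
  apply Rmax_lub; [nra|]. rewrite (Rmult_comm (arc_norm a)).
  eapply Rle_trans; [|apply Hrho]. apply Rmult_le_compat; auto.
Qed.

Lemma arc_norm_gstar_le a : finsupp a -> arc_norm (star a) <= arc_norm a.
Proof.
  intros Ha. assert (Hsa : finsupp (star a)) by (apply gstar_finsupp; auto).
  apply arc_norm_le; auto. intros gam Hg.
  pose proof (arc_norm_ge0 a Ha). pose proof (l1norm_ge0 (star a)).
  destruct (Rmult_div_succ_le (l1norm a) (gam * gam) (l1norm_ge0 a)) as [Hd Had]; [nra|].
  set (delta := gam * gam / (l1norm a + 1)) in *.
  destruct (arc_norm_approx a gam Ha Hg) as [ea [Hea Ha']].
  destruct (Rmult_div_succ_le (l1norm (star a)) (ea * delta)) as [He Hbe]; auto; [nra|].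
  set (eps := ea * delta / (l1norm (star a) + 1)) in *.
  assert (Hea' : l1norm (star a) * eps / delta <= ea).
  { apply Rmult_le_reg_r with delta; auto.
    unfold Rdiv. rewrite Rmult_assoc, Rinv_l, Rmult_1_r by lra.
    auto. }
  assert (Hbd : 0 <= l1norm (star a) * eps / delta)
    by (apply Rmult_le_pos; [apply Rmult_le_pos; lra | left; apply Rinv_0_lt_compat; auto]).
  exists eps. split; auto.
  eapply Rle_trans; [apply (arc_bound_gstar_le a eps delta); auto; lra|].
  apply Rmax_lub; [|apply Ha'; auto].
  rewrite <- (sqrt_pow2 (arc_norm a + gam)) by lra. apply sqrt_le_1_alt. nra.
Qed.

Lemma arc_norm_cstar a : finsupp a -> arc_norm (conv (star a) a) = arc_norm a ^ 2.
Proof.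
  intros Ha. assert (Hsa : finsupp (star a)) by (apply gstar_finsupp; auto).
  pose proof (arc_norm_ge0 a Ha). pose proof (arc_norm_ge0 _ Hsa).
  apply Rle_antisym.
  - eapply Rle_trans; [apply arc_norm_submult; auto|].
    pose proof (arc_norm_gstar_le a Ha). simpl. nra.
  - apply le_arc_norm. intros eps He.
    pose proof (arc_norm_le_arc_bound a eps Ha He).
    pose proof (arc_bound_ge0 (conv (star a) a) eps (gconv_finsupp _ _ Hsa Ha) ltac:(lra)).
    enough (arc_bound a eps <= sqrt (arc_bound (conv (star a) a) eps)).
    { pose proof (sqrt_sqrt _ H2). pose proof (sqrt_pos (arc_bound (conv (star a) a) eps)). nra. }
    apply arc_bound_le; [lra|]. intros eta Heta.
    pose proof (l2norm_lambda_sq_le a eta Ha (proj1 Heta)) as Hsq.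
    rewrite <- lambda_gconv in Hsq by auto.
    pose proof (le_arc_bound _ _ _ (gconv_finsupp _ _ Hsa Ha) Heta).
    pose proof (l2norm_ge0 (lam (conv (star a) a) eta)). destruct Heta as [_ [Hn _]].
    pose proof (l2norm_ge0 eta).
    rewrite <- (sqrt_pow2 (l2norm (lam a eta))) by apply l2norm_ge0. apply sqrt_le_1_alt. nra.
Qed.

Lemma arc_norm_le_reduced_norm a : finsupp a -> arc_norm a <= reduced_norm G mul inv a.
Proof.
  intros Ha. eapply Rle_trans; [apply (arc_norm_le_arc_bound a 1); auto; lra|].
  apply arc_bound_le; [lra|]. intros eta [Hf [Hn _]].
  apply l2norm_lambda_le_reduced_norm; auto. apply in_l2_finsupp; auto.
Qed.

Section NontrivialCentre.
Hypothesis z_neq_e : z <> e.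
Hypothesis zz_neq_e : mul z z <> e.

Definition one_plus_z : G -> C := fun g => Cplus (delta e g) (delta z g).

Lemma inv_z_neq_e : inv z <> e.
Proof. intros H. apply z_neq_e. rewrite <- (invgK z), H. apply invg1. Qed.

Lemma inv_z_neq_z : inv z <> z.
Proof. intros H. apply zz_neq_e. rewrite <- H at 1. apply mulVg. Qed.

Lemma zz_neq_z : mul z z <> z.
Proof. intros H. apply z_neq_e, (mulgI z). rewrite H, mulg1; auto. Qed.

Lemma NoDup_e_z : NoDup (e :: z :: nil).
Proof. repeat constructor; simpl; intuition. Qed.

Lemma supp_in_one_plus_z : supp_in (e :: z :: nil) one_plus_z.
Proof.
  intros g Hg. destruct (classical_eq_dec G g e) as [->|n1]; [left; auto|].
  destruct (classical_eq_dec G g z) as [->|n2]; [right; left; auto|].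
  exfalso. apply Hg. unfold one_plus_z. rewrite !delta_neq by auto. ring.
Qed.

Lemma one_plus_z_finsupp : finsupp one_plus_z.
Proof. exists (e :: z :: nil). apply supp_in_one_plus_z. Qed.

Lemma lambda_one_plus_z eta : lam one_plus_z eta = fun g => Cplus (eta g) (ztrans eta g).
Proof.
  apply functional_extensionality; intros g.
  rewrite (lambda_lsumC (e :: z :: nil)) by (apply NoDup_e_z || apply supp_in_one_plus_z).
  rewrite !lsumC_cons, lsumC_nil. unfold one_plus_z, ztrans.
  rewrite delta_eq, (delta_neq e z), (delta_neq z e), delta_eq, invg1, mul1g by auto. Cring.
Qed.

(* on an approximate eigenvector with eigenvalue [t], [1 + z] acts almost as [1 + t] *)
Lemma arc_norm_one_plus_z : arc_norm one_plus_z <= sqrt 2.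
Proof.
  apply arc_norm_le; [apply one_plus_z_finsupp|]. intros gam Hg. exists gam. split; auto.
  apply arc_bound_le; [lra|]. intros eta [Hf [Hn [t [Ht Hd]]]].
  rewrite lambda_one_plus_z.
  replace (fun g => Cplus (eta g) (ztrans eta g)) with
    (fun g => Cplus (Cmult (Cplus (RtoC 1) t) (eta g)) (eig_defect t eta g))
    by (apply functional_extensionality; intros; unfold eig_defect; ring).
  eapply Rle_trans; [apply l2norm_triangle; [apply finsupp_scal | apply eig_defect_finsupp]; auto|].
  rewrite l2norm_scal by auto.
  pose proof (Cmod_1_plus_left_arc t Ht). pose proof (Cmod_ge_0 (Cplus (RtoC 1) t)).
  pose proof (l2norm_ge0 eta). nra.
Qed.

(* [lam one_plus_z] maps the unit vector [(delta e + delta z) / sqrt 2] to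
   [(delta e + 2 delta z + delta (z z)) / sqrt 2], of norm [sqrt 3] *)
Lemma reduced_norm_one_plus_z : sqrt 3 <= reduced_norm G mul inv one_plus_z.
Proof.
  assert (Hs2 : 0 < sqrt 2) by (apply sqrt_lt_R0; lra).
  set (c := RtoC (/ sqrt 2)).
  assert (Hc : Cmod c = / sqrt 2)
    by (unfold c; rewrite Cmod_R, Rabs_right; auto; left; apply Rinv_0_lt_compat; auto).
  set (xi := fun g => Cmult c (one_plus_z g)).
  assert (Hxi : finsupp xi) by apply finsupp_scal, one_plus_z_finsupp.
  assert (Hn : l2norm xi = 1).
  { unfold xi. rewrite l2norm_scal, (l2norm_supp_in (e :: z :: nil)), Hc
      by (apply one_plus_z_finsupp || apply NoDup_e_z || apply supp_in_one_plus_z).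
    unfold sqsum. rewrite !lsumR_cons, lsumR_nil. unfold one_plus_z.
    rewrite delta_eq, (delta_neq e z), (delta_neq z e), delta_eq by auto.
    replace (Cplus (RtoC 1) (RtoC 0)) with (RtoC 1) by ring.
    replace (Cplus (RtoC 0) (RtoC 1)) with (RtoC 1) by ring.
    rewrite Cmod_1. replace (1 ^ 2 + (1 ^ 2 + 0)) with 2 by ring. apply Rinv_l; lra. }
  apply Rle_trans with (l2norm (lam one_plus_z xi)); [|apply l2norm_lambda_le_reduced_norm;
    [apply one_plus_z_finsupp | apply in_l2_finsupp; auto | lra]].
  rewrite lambda_one_plus_z, l2norm_sqrt. apply sqrt_le_1_alt.
  assert (N3 : NoDup (e :: z :: mul z z :: nil)).
  { constructor; [intros [H|[H|[]]]; [apply z_neq_e | apply zz_neq_e]; auto|].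
    constructor; [intros [H|[]]; apply zz_neq_z; auto|]. repeat constructor; intros []. }
  eapply Rle_trans; [|apply sqsum_le_l2sqnorm; [|exact N3]];
    [|apply in_l2_finsupp, finsupp_plus; [|apply ztrans_finsupp]; auto].
  unfold sqsum. rewrite !lsumR_cons, lsumR_nil. unfold xi, ztrans, one_plus_z.
  rewrite mulKg, mulg1, mulVg, !delta_eq.
  rewrite (delta_neq e z), (delta_neq z e), (delta_neq e (inv z)), (delta_neq z (inv z)),
    (delta_neq e (mul z z)), (delta_neq z (mul z z))
    by auto using inv_z_neq_e, inv_z_neq_z, zz_neq_z.
  replace (Cplus (Cmult c (Cplus (RtoC 1) (RtoC 0))) (Cmult c (Cplus (RtoC 0) (RtoC 0)))) with c
    by ring.
  replace (Cplus (Cmult c (Cplus (RtoC 0) (RtoC 1))) (Cmult c (Cplus (RtoC 1) (RtoC 0))))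
    with (Cmult (RtoC 2) c) by ring.
  replace (Cplus (Cmult c (Cplus (RtoC 0) (RtoC 0))) (Cmult c (Cplus (RtoC 0) (RtoC 1)))) with c
    by ring.
  rewrite Cmod_mult, Hc, Cmod_R, Rabs_right by lra.
  assert (H2 : (/ sqrt 2) ^ 2 = / 2).
  { rewrite pow_inv. simpl. rewrite Rmult_1_r, sqrt_sqrt; lra. }
  replace ((2 * / sqrt 2) ^ 2) with (4 * (/ sqrt 2) ^ 2) by ring. rewrite H2. lra.
Qed.

End NontrivialCentre.

(** * Definiteness for a central element of infinite order *)

Section InfiniteOrder.
Hypothesis z_infinite_order : forall n : nat, (0 < n)%nat -> gpow mul e z n <> e.

Local Notation zpow := (gpow mul e z).

Lemma zpow_add m n : zpow (m + n) = mul (zpow m) (zpow n).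
Proof. induction m; simpl; [rewrite mul1g | rewrite IHm, mulgA]; auto. Qed.

Lemma zpow_central n g : mul (zpow n) g = mul g (zpow n).
Proof.
  induction n; simpl; [rewrite mul1g, mulg1; auto|].
  rewrite <- mulgA, IHn, mulgA, z_central, mulgA; auto.
Qed.

Lemma zpow_inj m n : zpow m = zpow n -> m = n.
Proof.
  assert (Hlt : forall m n, (m < n)%nat -> zpow m <> zpow n).
  { intros m' n' Hmn H. apply (z_infinite_order (n' - m')); [lia|].
    apply (mulgI (zpow m')). rewrite <- zpow_add, mulg1.
    replace (m' + (n' - m'))%nat with n' by lia.
    auto. }
  intros H. destruct (Nat.lt_trichotomy m n) as [L|[L|L]]; auto; exfalso.
  - apply (Hlt m n); auto.
  - apply (Hlt n m); auto.
Qed.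

Lemma zpow_quot_inj p q p' q' :
  mul (zpow p) (inv (zpow q)) = mul (zpow p') (inv (zpow q')) -> (p + q' = p' + q)%nat.
Proof.
  intros H. apply zpow_inj. rewrite !zpow_add.
  replace (zpow p) with (mul (mul (zpow p') (inv (zpow q'))) (zpow q))
    by (rewrite <- H, <- mulgA, mulVg, mulg1; auto).
  rewrite <- !mulgA. f_equal.
  rewrite (zpow_central q (zpow q')), mulgA, mulVg, mul1g; auto.
Qed.

Lemma zpow_quot_shift m D j : mul (zpow (m + D)) (inv (zpow (m + j))) = mul (zpow D) (inv (zpow j)).
Proof.
  rewrite !zpow_add, invMg, <- mulgA, (zpow_central m), <- !mulgA, mulVg, mulg1; auto.
Qed.

Lemma inv_z_neq_zpow i : inv z <> zpow i.
Proof. intros H. apply (z_infinite_order (S i)); [lia|]. simpl. rewrite <- H. apply mulgV. Qed.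

Lemma finsupp_zpow_band b : finsupp b -> exists D, forall p q,
  b (mul (zpow p) (inv (zpow q))) <> RtoC 0 -> (p <= q + D /\ q <= p + D)%nat.
Proof.
  intros [l Hl].
  enough (HD : exists D, forall x, In x l -> forall p q,
    mul (zpow p) (inv (zpow q)) = x -> (p <= q + D /\ q <= p + D)%nat)
    by (destruct HD as [D HD]; exists D; intros p q H; apply (HD _ (Hl _ H)); auto).
  clear Hl. induction l as [|x l [D HD]]; [exists 0%nat; intros x []|].
  destruct (excluded_middle_informative (exists p0 q0, mul (zpow p0) (inv (zpow q0)) = x))
    as [[p0 [q0 Hx]]|Hx].
  - exists (p0 + q0 + D)%nat. intros y [<-|Hy] p q Hpq.
    + rewrite <- Hx in Hpq. apply zpow_quot_inj in Hpq. lia.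
    + destruct (HD y Hy p q Hpq). lia.
  - exists D. intros y [<-|Hy] p q Hpq; [exfalso; eauto | apply (HD y Hy p q Hpq)].
Qed.

Definition geom (n : nat) c (s : C) : G -> C :=
  fun g => lsumC nat (seq 0 n) (fun i => Cmult (Cmult c (Cpow s i)) (delta (zpow i) g)).

Lemma geom_zpow n c s k : (k < n)%nat -> geom n c s (zpow k) = Cmult c (Cpow s k).
Proof.
  intros Hk. unfold geom. rewrite (lsumC_single _ _ _ k).
  - rewrite delta_eq; ring.
  - apply seq_NoDup.
  - apply in_seq; lia.
  - intros i _ Hik. rewrite delta_neq; [ring|]. intros E. apply Hik, zpow_inj; auto.
Qed.

Lemma geom_out n c s g : (forall i, (i < n)%nat -> g <> zpow i) -> geom n c s g = RtoC 0.
Proof.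
  intros H. unfold geom. apply lsumC_eq0. intros i Hi. apply in_seq in Hi.
  rewrite delta_neq; [ring | apply H; lia].
Qed.

Lemma zpow_list_NoDup k : NoDup (map zpow (seq 0 k)).
Proof. apply FinFun.Injective_map_NoDup; [intros a b; apply zpow_inj | apply seq_NoDup]. Qed.

Lemma supp_in_geom n c s : supp_in (map zpow (seq 0 n)) (geom n c s).
Proof.
  intros g Hg. destruct (excluded_middle_informative (exists i, (i < n)%nat /\ g = zpow i))
    as [[i [Hi ->]]|H].
  - apply in_map, in_seq; lia.
  - exfalso. apply Hg, geom_out. intros i Hi E. apply H; eauto.
Qed.

Lemma geom_finsupp n c s : finsupp (geom n c s).
Proof. exists (map zpow (seq 0 n)). apply supp_in_geom. Qed.

Section UnitRatio.
Variables (c s : C).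
Hypothesis s_unit : Cmod s = 1.

Lemma Cmod_Cpow_unit k : Cmod (Cpow s k) = 1.
Proof. rewrite Cmod_pow, s_unit. apply pow1. Qed.

Lemma l2norm_geom n : l2norm (geom n c s) = sqrt (INR n * Cmod c ^ 2).
Proof.
  rewrite (l2norm_supp_in _ _ (zpow_list_NoDup n) (supp_in_geom n c s)).
  f_equal. unfold sqsum. rewrite lsumR_map, (lsumR_ext _ _ _ (fun _ => Cmod c ^ 2)),
    lsumR_const, length_seq; auto.
  intros k Hk. apply in_seq in Hk. rewrite geom_zpow, Cmod_mult, Cmod_Cpow_unit by lia. ring.
Qed.

(* only the two ends of the geometric progression contribute to the defect *)
Lemma l2norm_eig_defect_geom n : (1 <= n)%nat ->
  l2norm (eig_defect (Cconj s) (geom n c s)) = sqrt (2 * Cmod c ^ 2).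
Proof.
  intros Hn. set (t := Cconj s).
  assert (Ht : Cmod t = 1) by (unfold t; rewrite Cmod_conj; auto).
  assert (Hts : Cmult t s = RtoC 1)
    by (unfold t; rewrite Cmult_comm, <- Cmod2_conj, s_unit; f_equal; ring).
  assert (Hsupp : supp_in (map zpow (seq 0 (S n))) (eig_defect t (geom n c s))).
  { intros g Hg. unfold eig_defect, ztrans in Hg.
    destruct (excluded_middle_informative (geom n c s g = RtoC 0)) as [E|E].
    - destruct (excluded_middle_informative (geom n c s (mul (inv z) g) = RtoC 0)) as [E2|E2].
      + exfalso; apply Hg. rewrite E, E2. ring.
      + apply supp_in_geom, in_map_iff in E2. destruct E2 as [i [Hi Hi']].
        apply in_seq in Hi'. rewrite <- (mulKVg z g), <- Hi.
        change (In (zpow (S i)) (map zpow (seq 0 (S n)))). apply in_map, in_seq. lia.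
    - apply supp_in_geom, in_map_iff in E. destruct E as [i [<- Hi']].
      apply in_map, in_seq. apply in_seq in Hi'. lia. }
  rewrite (l2norm_supp_in _ _ (zpow_list_NoDup (S n)) Hsupp). f_equal.
  unfold sqsum. rewrite lsumR_map. cbn [seq]. rewrite lsumR_cons, <- seq_shift, lsumR_map.
  destruct n as [|n']; [lia|].
  rewrite seq_S, lsumR_app, lsumR_cons, lsumR_nil, (lsumR_ext _ _ _ (fun _ => 0)).
  2:{ intros k Hk. apply in_seq in Hk. unfold eig_defect, ztrans. cbn [gpow].
      rewrite mulKg. change (mul z (zpow k)) with (zpow (S k)).
      rewrite !geom_zpow by lia. cbn [Cpow].
      replace (Cminus (Cmult c (Cpow s k)) (Cmult t (Cmult c (Cmult s (Cpow s k))))) with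
        (Cmult (Cmult c (Cpow s k)) (Cminus (RtoC 1) (Cmult t s))) by ring.
      rewrite Hts. replace (Cminus (RtoC 1) (RtoC 1)) with (RtoC 0) by ring.
      rewrite Cmult_0_r, Cmod_0. ring. }
  rewrite lsumR_const, Rmult_0_r.
  unfold eig_defect, ztrans. cbn [gpow]. rewrite mulKg, mulg1.
  rewrite (geom_out _ _ _ (inv z)) by (intros i _; apply inv_z_neq_zpow).
  rewrite (geom_out _ _ _ (mul z (zpow (0 + n')))).
  2:{ intros i Hi E. change (mul z (zpow (0 + n'))) with (zpow (S (0 + n'))) in E.
      apply zpow_inj in E. lia. }
  change e with (zpow 0). rewrite !geom_zpow by lia. cbn [Cpow].
  replace (Cminus (RtoC 0) (Cmult t (Cmult c (RtoC 1)))) with (Copp (Cmult t c)) by ring.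
  replace (Cminus (Cmult c (Cpow s (0 + n'))) (Cmult t (RtoC 0))) with (Cmult c (Cpow s (0 + n')))
    by ring.
  rewrite Cmod_opp, !Cmod_mult, Ht, Cmod_Cpow_unit. ring.
Qed.

End UnitRatio.

Lemma lambda_geom b n c s x : finsupp b ->
  lam b (geom n c s) x =
  lsumC nat (seq 0 n) (fun i => Cmult (Cmult c (Cpow s i)) (b (mul x (inv (zpow i))))).
Proof.
  intros Hb.
  assert (Hsub : forall y, mul (inv (mul x (inv y))) x = y)
    by (intros y; rewrite invMg, invgK, <- mulgA, mulVg, mulg1; auto).
  unfold lambda.
  rewrite <- (fsum_bij (fun y => mul x (inv y)) (fun h => mul (inv h) x)); auto.
  - rewrite (fsum_eq_lsumC (map zpow (seq 0 n))).
    + rewrite lsumC_map. apply lsumC_ext. intros k Hk. apply in_seq in Hk.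
      rewrite Hsub, geom_zpow by lia. Cring.
    + apply zpow_list_NoDup.
    + intros y Hy. apply Cmult_neq0 in Hy. rewrite Hsub in Hy. apply (supp_in_geom n c s); tauto.
  - intros h. rewrite invMg, invgK, mulgA, mulgV, mul1g; auto.
  - apply finsupp_mult_l; auto.
Qed.

Lemma almost_eigvec_geom eps n s : left_arc s -> (1 <= n)%nat -> 2 <= INR n * eps ^ 2 ->
  0 <= eps -> almost_eigvec eps (geom n (RtoC (/ sqrt (INR n))) s).
Proof.
  intros Hs Hn Heps He.
  assert (Hnp : 0 < INR n) by (apply lt_0_INR; lia).
  pose proof (Cmod_inv_sqrt_sq (INR n) Hnp) as Hc.
  split; [apply geom_finsupp|]. split.
  - rewrite l2norm_geom, Hc, Rinv_r, sqrt_1 by (apply Hs || lra). lra.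
  - exists (Cconj s). split; [apply left_arc_conj; auto|].
    rewrite l2norm_eig_defect_geom, Hc by (apply Hs || auto).
    rewrite <- (sqrt_pow2 eps) by lra. apply sqrt_le_1_alt.
    apply Rmult_le_reg_r with (INR n); auto. rewrite Rmult_assoc, Rinv_l by lra. nra.
Qed.

Section Band.
Variables (b : G -> C) (D : nat).
Hypothesis b_finsupp : finsupp b.
Hypothesis b_band : forall p q,
  b (mul (zpow p) (inv (zpow q))) <> RtoC 0 -> (p <= q + D /\ q <= p + D)%nat.

Definition band_coeffs : list C :=
  map (fun j => b (mul (zpow D) (inv (zpow j)))) (seq 0 (2 * D + 1)).

Lemma lambda_geom_window n c s m : (m + (2 * D + 1) <= n)%nat ->
  lam b (geom n c s) (zpow (m + D)) = Cmult (Cmult c (Cpow s m)) (horner band_coeffs s).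
Proof.
  intros Hm. rewrite lambda_geom by auto.
  rewrite (lsumC_seq_window n m (2 * D + 1)); auto.
  2:{ intros i Hi.
      destruct (excluded_middle_informative (b (mul (zpow (m + D)) (inv (zpow i))) = RtoC 0))
        as [E|E]; [rewrite E; ring|].
      apply b_band in E. lia. }
  rewrite lsumC_seq_shift, (lsumC_ext _ _ _ (fun j => Cmult (Cmult c (Cpow s m))
    (Cmult (b (mul (zpow D) (inv (zpow j)))) (Cpow s j)))).
  - rewrite lsumC_scal, (lsumC_seq_horner 0). cbn [Cpow]. unfold band_coeffs. Cring.
  - intros j _. rewrite zpow_quot_shift, Cpow_add_r. ring.
Qed.

Lemma l2norm_lambda_geom_ge n c s : (2 * D + 1 <= n)%nat -> Cmod s = 1 ->
  INR (n - (2 * D + 1)) * (Cmod c ^ 2 * Cmod (horner band_coeffs s) ^ 2) <=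
  l2norm (lam b (geom n c s)) ^ 2.
Proof.
  intros Hn Hs.
  assert (Hf : finsupp (lam b (geom n c s))) by (apply lambda_finsupp, geom_finsupp; auto).
  rewrite l2norm_sqrt, pow2_sqrt by (apply l2sqnorm_ge0, in_l2_finsupp; auto).
  set (l := map (fun m => zpow (m + D)) (seq 0 (n - (2 * D + 1)))).
  assert (N : NoDup l).
  { apply FinFun.Injective_map_NoDup; [|apply seq_NoDup].
    intros a a' E. apply zpow_inj in E. lia. }
  eapply Rle_trans; [|apply (sqsum_le_l2sqnorm l); auto; apply in_l2_finsupp; auto].
  unfold sqsum, l.
  rewrite lsumR_map, (lsumR_ext _ _ _ (fun _ => Cmod c ^ 2 * Cmod (horner band_coeffs s) ^ 2)),
    lsumR_const, length_seq; [lra|].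
  intros m Hm. apply in_seq in Hm. rewrite lambda_geom_window by lia.
  rewrite !Cmod_mult, (Cmod_Cpow_unit s Hs). ring.
Qed.

(* For large [n], [geom n (1/sqrt n) s] is an almost eigenvector which [lam b] multiplies,
   away from its ends, by [horner band_coeffs s]. *)
Lemma band_horner_le_arc_norm s : left_arc s -> Cmod (horner band_coeffs s) / 2 <= arc_norm b.
Proof.
  intros Hs. set (rho := Cmod (horner band_coeffs s)).
  apply le_arc_norm. intros eps He.
  destruct (INR_archimed (eps ^ 2) 2) as [n0 Hn0]; [apply Rlt_gt, pow_lt; auto|].
  set (n := (n0 + 2 * (2 * D + 1))%nat).
  assert (Hn : INR n0 <= INR n) by (apply le_INR; unfold n; lia).
  assert (Hnp : 0 < INR n) by (apply lt_0_INR; unfold n; lia).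
  set (c := RtoC (/ sqrt (INR n))).
  assert (Adm : almost_eigvec eps (geom n c s))
    by (apply almost_eigvec_geom; auto; [unfold n; lia | nra | lra]).
  pose proof (le_arc_bound b eps _ b_finsupp Adm) as HM.
  pose proof (l2norm_lambda_geom_ge n c s ltac:(unfold n; lia) (proj2 Hs)) as HL.
  fold rho in HL. unfold c in HL. rewrite (Cmod_inv_sqrt_sq (INR n) Hnp) in HL.
  assert (Hhalf : INR n / 2 <= INR (n - (2 * D + 1))).
  { rewrite minus_INR by (unfold n; lia).
    assert (INR (2 * (2 * D + 1)) <= INR n) by (apply le_INR; unfold n; lia).
    rewrite mult_INR in H. change (INR 2) with 2 in H. lra. }
  assert (Hlow : (rho / 2) ^ 2 <= l2norm (lam b (geom n c s)) ^ 2).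
  { eapply Rle_trans; [|exact HL].
    apply Rle_trans with (INR n / 2 * (/ INR n * rho ^ 2)).
    - replace (INR n / 2 * (/ INR n * rho ^ 2)) with (rho ^ 2 / 2) by (field; lra). nra.
    - apply Rmult_le_compat_r; auto.
      apply Rmult_le_pos; [left; apply Rinv_0_lt_compat; auto | apply pow2_ge_0]. }
  pose proof (l2norm_ge0 (lam b (geom n c s))). pose proof (Cmod_ge_0 (horner band_coeffs s)).
  enough (rho / 2 <= l2norm (lam b (geom n c s))) by lra.
  apply Rsqr_incr_0_var; [unfold Rsqr; nra | auto].
Qed.

End Band.

Lemma arc_norm_pos b : finsupp b -> b e <> RtoC 0 -> 0 < arc_norm b.
Proof.
  intros Hb Hbe. destruct (finsupp_zpow_band b Hb) as [D HD].
  destruct (horner_nonvanishing (band_coeffs b D) (map left_arc_point (seq 0 (2 * D + 1))))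
    as [s [Hs Hnz]].
  - apply left_arc_points_NoDup.
  - unfold band_coeffs. rewrite !length_map. auto.
  - exists (b (mul (zpow D) (inv (zpow D)))). split; [|rewrite mulgV; auto].
    apply (in_map (fun j => b (mul (zpow D) (inv (zpow j))))), in_seq. lia.
  - apply in_map_iff in Hs. destruct Hs as [k [<- _]]. apply Cmod_gt_0 in Hnz.
    pose proof (band_horner_le_arc_norm b D Hb HD (left_arc_point k) (left_arc_point_spec k)).
    lra.
Qed.

Lemma arc_norm_definite a : finsupp a -> arc_norm a = 0 -> forall g, a g = C0.
Proof.
  intros Ha HN g0. destruct (excluded_middle_informative (a g0 = C0)) as [|E]; auto. exfalso.
  set (b := conv (delta (inv g0)) a).
  assert (Hbf : finsupp b) by (apply gconv_finsupp; auto; apply delta_finsupp).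
  assert (Hbe : b e = a g0).
  { unfold b, gconv. rewrite (fsum_single _ (inv g0)).
    - rewrite delta_eq, invgK, mulg1. Cring.
    - intros h Hh. rewrite delta_neq by auto. Cring. }
  pose proof (arc_norm_pos b Hbf ltac:(rewrite Hbe; exact E)).
  pose proof (arc_norm_submult _ a (delta_finsupp (inv g0)) Ha).
  fold b in H0. rewrite HN, Rmult_0_r in H0. lra.
Qed.

Lemma arc_norm_lt_reduced_norm : arc_norm one_plus_z < reduced_norm G mul inv one_plus_z.
Proof.
  assert (Hz : z <> e)
    by (intros E; apply (z_infinite_order 1); [lia|]; simpl; rewrite mulg1; auto).
  assert (Hzz : mul z z <> e)
    by (intros E; apply (z_infinite_order 2); [lia|]; simpl; rewrite mulg1; auto).
  pose proof (arc_norm_one_plus_z Hz). pose proof (reduced_norm_one_plus_z Hz Hzz).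
  assert (sqrt 2 < sqrt 3) by (apply sqrt_lt_1; lra). lra.
Qed.

Lemma arc_norm_Cstar_norm : is_Cstar_norm G mul inv arc_norm.
Proof.
  constructor.
  - apply arc_norm_ge0.
  - apply arc_norm_definite.
  - apply arc_norm_triangle.
  - intros c a; apply arc_norm_scal.
  - apply arc_norm_submult.
  - apply arc_norm_cstar.
Qed.

End InfiniteOrder.

End CentralElement.

End GroupAlgebra.

Theorem proposition3 (G : Type) (mul : G -> G -> G) (inv : G -> G) (e : G)
  (Hgrp : is_group mul inv e) (Hcount : countable G)
  (Hz : exists z : G, (forall g, mul z g = mul g z) /\
                      (forall n : nat, (0 < n)%nat -> gpow mul e z n <> e)) :
  ~ Cr_unique G mul inv.
Proof.
  destruct Hz as [z [Hzc Hinf]]. intros Hunique. apply Hunique.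
  exists (arc_norm G mul inv z). split; [|split].
  - apply arc_norm_Cstar_norm with (e := e); auto.
  - intros a Ha. apply (arc_norm_le_reduced_norm G mul inv e Hgrp); auto.
  - exists (one_plus_z G e z). split.
    + apply one_plus_z_finsupp.
    + apply (arc_norm_lt_reduced_norm G mul inv e Hgrp); auto.
Qed.
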